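(* Let $\alpha>0$, $A\ge0$, $B>0$, $t>0$, and let $P_n(x,t)$ be the monic polynomials orthogonal on $[0,\infty)$ w.r.t. $w(x,t)=x^\alpha e^{-x}(A+B\theta(x-t))$, with norms $h_n(t)$. Let $R_n(t)=Bt^\alpha e^{-t}\{P_n(t,t)\}^2/h_n(t)$, $r_n(t)=Bt^\alpha e^{-t}P_n(t,t)P_{n-1}(t,t)/h_{n-1}(t)$, $D_n(t)=\prod_{j=0}^{n-1}h_j(t)$ ($D_0=1$) and $H_n(t)=t\frac{d}{dt}\ln D_n(t)$. Then for $n\ge1$ (whenever the denominators are nonzero) $$tR_n=H_n-H_{n+1},$$ $$t\,r_n=\frac{[H_n-n(n+\alpha)](t+H_{n+1}-H_{n-1})+t\,n(n+\alpha)}{t+H_{n+1}-H_{n-1}-2n-\alpha},$$ and $$(t\,r_n)^2=\left[n(n+\alpha)+t\,r_n-H_n\right]\left[(tR_n)^2+tR_n(H_{n+1}+H_{n-1}-2H_n)\right];$$ substituting the first two formulas into the third yields a second-order difference equation in $n$ for $H_n$.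
   Context: $\theta$ is the Heaviside function ($1$ for $x>0$, $0$ otherwise); $P_n(t,t)$ is $P_n(x,t)$ at $x=t$. *)

From Stdlib Require Import Reals.
From Coquelicot Require Import Coquelicot.
Open Scope R_scope.

Definition theta (y : R) : R := if Rlt_dec 0 y then 1 else 0.

(* x^a for x > 0; set to 0 for x <= 0 (only x = 0 matters on [0,oo), a > 0) *)
Definition xpow (x a : R) : R := if Rlt_dec 0 x then Rpower x a else 0.

Definition weight (alpha A B t x : R) : R :=
  xpow x alpha * exp (- x) * (A + B * theta (x - t)).

Definition int0inf (f : R -> R) : R :=
  RInt_gen f (at_point 0) (Rbar_locally p_infty).

Fixpoint psum (c : nat -> R) (n : nat) (x : R) : R :=
  match n with
  | O => 0
  | S k => psum c k x + c k * x ^ k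
  end.

Definition monic_deg (n : nat) (p : R -> R) : Prop :=
  exists c : nat -> R, forall x, p x = x ^ n + psum c n x.

Definition monic_OPS (alpha A B : R) (P : nat -> R -> R -> R) : Prop :=
  forall s, 0 < s ->
    (forall n, monic_deg n (fun x => P n x s)) /\
    (forall m n, m <> n ->
       is_RInt_gen (fun x => P m x s * P n x s * weight alpha A B s x)
                   (at_point 0) (Rbar_locally p_infty) 0).

Definition hn (alpha A B : R) (P : nat -> R -> R -> R) (n : nat) (t : R) : R :=
  int0inf (fun x => (P n x t) ^ 2 * weight alpha A B t x).

Fixpoint Dn (alpha A B : R) (P : nat -> R -> R -> R) (n : nat) (t : R) : R :=
  match n with
  | O => 1
  | S k => Dn alpha A B P k t * hn alpha A B P k t
  end.

Definition Hn (alpha A B : R) (P : nat -> R -> R -> R) (n : nat) (t : R) : R :=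
  t * Derive (fun s => ln (Dn alpha A B P n s)) t.

Definition Rn_t (alpha A B : R) (P : nat -> R -> R -> R) (n : nat) (t : R) : R :=
  B * xpow t alpha * exp (- t) * (P n t t) ^ 2 / hn alpha A B P n t.

Definition rn_t (alpha A B : R) (P : nat -> R -> R -> R) (n : nat) (t : R) : R :=
  B * xpow t alpha * exp (- t) * P n t t * P (n - 1)%nat t t
    / hn alpha A B P (n - 1)%nat t.

From Stdlib Require Import Reals Lra Lia FunctionalExtensionality ClassicalEpsilon.
From Coquelicot Require Import Coquelicot.
Open Scope R_scope.

(** Fix t > 0 and write L f for the integral of f against w(., t).  The weight
    jumps by rho = B t^alpha e^-t at x = t, so integration by parts gives
    L (f + x f') = L (x f) - alpha L f - t rho f(t) for polynomials f.  Applied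
    to the orthogonal polynomials, this identifies the recurrence coefficients
    x P_n = P_{n+1} + a_n P_n + b_n P_{n-1} as a_n = 2n + 1 + alpha + t R_n and
    b_n = t r_n + sum_{j<n} a_j.  Expanding x P_n' in the basis P_k, evaluating
    at x = 0 and using the Christoffel-Darboux formula gives two ladder
    relations between P_{n-1}(0) and P_n(0).  These never vanish together, so
    eliminating them gives (n + r_n)(n + alpha + r_n) = b_n (1 - R_n)(1 - R_{n-1});
    as r_n^2 = b_n R_n R_{n-1} by definition, this is
    n (n + alpha) + (2n + alpha) r_n = b_n (1 - R_n - R_{n-1}).
    On the other hand the moments are incomplete gamma functions of t, so the
    coefficients of P_n are differentiable in t, and orthogonality leaves only
    the jump in h_n' = -rho P_n(t,t)^2, i.e. H_n = -t sum_{j<n} R_j.  The three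
    identities are then rational consequences. *)

Lemma xpow_pos x a : 0 < x -> xpow x a = Rpower x a.
Proof. intros H; unfold xpow; destruct (Rlt_dec 0 x); [reflexivity|lra]. Qed.

Lemma xpow_nonpos x a : x <= 0 -> xpow x a = 0.
Proof. intros H; unfold xpow; destruct (Rlt_dec 0 x); [lra|reflexivity]. Qed.

Lemma xpow_ge0 x a : 0 <= xpow x a.
Proof. unfold xpow; destruct (Rlt_dec 0 x); [unfold Rpower; left; apply exp_pos|lra]. Qed.

Lemma pow_mul_xpow x k a : x ^ k * xpow x a = xpow x (INR k + a).
Proof.
  destruct (Rlt_dec 0 x) as [Hp|Hn].
  - rewrite !xpow_pos by exact Hp. rewrite Rpower_plus, Rpower_pow by exact Hp. reflexivity.
  - rewrite !xpow_nonpos by lra. ring.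
Qed.

Lemma xpow_small_near_0 a : 0 < a -> forall eps, 0 < eps ->
  exists d, 0 < d /\ forall x, Rabs x < d -> Rabs (xpow x a) < eps.
Proof.
  intros Ha eps He. exists (Rpower eps (/ a)). split.
  { unfold Rpower; apply exp_pos. }
  intros x Hx. destruct (Rle_dec x 0) as [Hn|Hp].
  - rewrite xpow_nonpos by lra. rewrite Rabs_R0; lra.
  - rewrite xpow_pos by lra. rewrite Rabs_pos_eq in Hx by lra.
    rewrite Rabs_pos_eq by (unfold Rpower; left; apply exp_pos).
    replace eps with (Rpower (Rpower eps (/a)) a).
    + apply Rlt_Rpower_l; lra.
    + rewrite Rpower_mult. rewrite Rinv_l by lra. apply Rpower_1; lra.
Qed.

Lemma xpow_locally_pos a x : 0 < x -> locally x (fun y => Rpower y a = xpow y a).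
Proof.
  intros Hx. apply (filter_imp (fun y => 0 < y)); [|exact (open_gt 0 x Hx)].
  intros y Hy. symmetry. apply xpow_pos, Hy.
Qed.

Lemma xpow_locally_neg a x : x < 0 -> locally x (fun y => 0 = xpow y a).
Proof.
  intros Hx. apply (filter_imp (fun y => y < 0)); [|exact (open_lt 0 x Hx)].
  intros y Hy. symmetry. apply xpow_nonpos. lra.
Qed.

Lemma continuous_xpow a x : 0 < a -> continuous (fun y => xpow y a) x.
Proof.
  intros Ha. destruct (Rtotal_order x 0) as [Hx|[->|Hx]].
  - apply continuous_ext_loc with (fun _ => 0); [apply xpow_locally_neg, Hx|apply continuous_const].
  - apply continuity_pt_filterlim.
    intros eps He. destruct (xpow_small_near_0 a Ha eps He) as [d [Hd Hsmall]].
    exists d. split; [exact Hd|]. intros y [_ Hy].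
    simpl in *. unfold Rdist in *.
    rewrite (xpow_nonpos 0) by lra. rewrite !Rminus_0_r in *. apply Hsmall, Hy.
  - apply continuous_ext_loc with (fun y => Rpower y a); [apply xpow_locally_pos, Hx|].
    apply continuity_pt_filterlim, derivable_continuous_pt.
    exists (a * Rpower x (a - 1)). apply derivable_pt_lim_power, Hx.
Qed.

Lemma is_derive_xpow b x : 1 < b -> is_derive (fun y => xpow y b) x (b * xpow x (b - 1)).
Proof.
  intros Hb. destruct (Rtotal_order x 0) as [Hx|[->|Hx]].
  - apply is_derive_ext_loc with (fun _ => 0); [apply xpow_locally_neg, Hx|].
    rewrite xpow_nonpos, Rmult_0_r by lra. apply is_derive_Reals, derivable_pt_lim_const.
  - apply is_derive_Reals. intros eps He.
    destruct (xpow_small_near_0 (b - 1) ltac:(lra) eps He) as [d [Hd Hsmall]].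
    exists (mkposreal d Hd). intros y Hy0 Hy. simpl in Hy.
    rewrite (xpow_nonpos 0 b), (xpow_nonpos 0 (b - 1)) by lra.
    rewrite Rmult_0_r, Rplus_0_l, !Rminus_0_r.
    destruct (Rle_dec y 0) as [Hn|Hp].
    + rewrite xpow_nonpos by lra. unfold Rdiv. rewrite Rmult_0_l, Rabs_R0. lra.
    + replace (xpow y b / y) with (xpow y (b - 1)); [apply Hsmall, Hy|].
      rewrite !xpow_pos by lra. replace b with ((b - 1) + 1) at 2 by ring.
      rewrite Rpower_plus, Rpower_1 by lra. field. lra.
  - apply is_derive_ext_loc with (fun y => Rpower y b); [apply xpow_locally_pos, Hx|].
    rewrite xpow_pos by exact Hx. apply is_derive_Reals, derivable_pt_lim_power, Hx.
Qed.

Lemma exp_pow (y : R) (n : nat) : exp y ^ n = exp (INR n * y).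
Proof.
  induction n as [|n IH].
  - simpl. rewrite Rmult_0_l, exp_0. reflexivity.
  - rewrite S_INR. simpl pow. rewrite IH, <- exp_plus. f_equal. ring.
Qed.

Lemma exp_le_compat x y : x <= y -> exp x <= exp y.
Proof.
  intros H; destruct (Rle_lt_or_eq_dec _ _ H) as [H'|H'];
    [left; apply exp_increasing, H'|rewrite H'; lra].
Qed.

Lemma xpow_le_1_plus_pow a x N : 0 < a -> a <= INR N -> 0 <= x -> xpow x a <= 1 + x ^ N.
Proof.
  intros Ha HN Hx. pose proof (pow_le x N Hx) as HxN.
  destruct (Req_dec x 0) as [H0|H0].
  - subst. rewrite xpow_nonpos by lra. lra.
  - rewrite xpow_pos by lra. destruct (Rle_dec x 1) as [H1|H1].
    + assert (Rpower x a <= 1).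
      { unfold Rpower. rewrite <- exp_0. apply exp_le_compat.
        assert (ln x <= 0) by (rewrite <- ln_1; apply ln_le; lra).
        nra. }
      lra.
    + rewrite <- (Rpower_pow N x) by lra.
      destruct (Req_dec a (INR N)) as [E|E].
      * rewrite E; lra.
      * assert (Rpower x a < Rpower x (INR N)) by (apply Rpower_lt; lra). lra.
Qed.

Lemma pow_le_exp_half N x : (1 <= N)%nat -> 0 <= x -> x ^ N <= (2 * INR N) ^ N * exp (x / 2).
Proof.
  intros HN Hx. assert (HNp : 0 < INR N) by (apply lt_0_INR; lia).
  set (y := x / (2 * INR N)).
  assert (Hy : 0 <= y) by (apply Rmult_le_pos; [lra|left; apply Rinv_0_lt_compat; lra]).
  assert (Hyexp : y ^ N <= exp y ^ N).
  { apply pow_incr. split; [exact Hy|]. pose proof (exp_ineq1_le y). lra. }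
  rewrite exp_pow in Hyexp. replace (INR N * y) with (x / 2) in Hyexp by (unfold y; field; lra).
  replace (x ^ N) with ((2 * INR N) ^ N * y ^ N)
    by (unfold y; rewrite <- Rpow_mult_distr; f_equal; field; lra).
  apply Rmult_le_compat_l; [apply pow_le; lra|exact Hyexp].
Qed.

Lemma nat_upper_bound a : exists N : nat, a <= INR N /\ (1 <= N)%nat.
Proof.
  destruct (INR_unbounded a) as [N HN]. exists (S N). split; [|lia].
  rewrite S_INR. lra.
Qed.

(** [gamma_kernel a] is x^a e^-x on (0, oo), so [upper_gamma a s] below is the
    incomplete gamma function Gamma(a + 1, s). *)
Definition gamma_kernel (a x : R) : R := xpow x a * exp (- x).

Lemma gamma_kernel_ge0 a x : 0 <= gamma_kernel a x.
Proof. unfold gamma_kernel. apply Rmult_le_pos; [apply xpow_ge0|left; apply exp_pos]. Qed.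

Lemma continuous_gamma_kernel a x : 0 < a -> continuous (gamma_kernel a) x.
Proof.
  intros Ha. apply (continuous_mult (fun y => xpow y a) (fun y => exp (- y))).
  - apply continuous_xpow, Ha.
  - apply (ex_derive_continuous (fun y => exp (- y))). auto_derive. exact I.
Qed.

Lemma ex_RInt_gamma_kernel a u v : 0 < a -> ex_RInt (gamma_kernel a) u v.
Proof.
  intros Ha. apply (@ex_RInt_continuous R_CompleteNormedModule).
  intros z _. apply continuous_gamma_kernel, Ha.
Qed.

Lemma gamma_kernel_exp_bound a : 0 < a ->
  exists C, 0 < C /\ forall x, 0 <= x -> gamma_kernel a x <= C * exp (- x / 2).
Proof.
  intros Ha. destruct (nat_upper_bound a) as [N [HN HN1]].
  set (K := (2 * INR N) ^ N).
  assert (HK : 0 < K) by (apply pow_lt; apply lt_0_INR in HN1; lra).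
  exists (1 + K). split; [lra|]. intros x Hx.
  pose proof (pow_le_exp_half N x HN1 Hx) as Hpow. fold K in Hpow.
  pose proof (xpow_le_1_plus_pow a x N Ha HN Hx) as Hxp.
  assert (He : exp (- x) <= exp (- x / 2)) by (apply exp_le_compat; lra).
  assert (E2 : exp (x / 2) * exp (- x) = exp (- x / 2)) by (rewrite <- exp_plus; f_equal; field).
  pose proof (exp_pos (- x)).
  unfold gamma_kernel.
  apply Rle_trans with ((1 + K * exp (x / 2)) * exp (- x)); [|nra].
  apply Rmult_le_compat_r; lra.
Qed.

Lemma gamma_kernel_vanishes_at_infty a : 0 < a ->
  forall eps, 0 < eps -> exists M, forall y, M < y -> gamma_kernel a y < eps.
Proof.
  intros Ha eps He. destruct (gamma_kernel_exp_bound a Ha) as [C [HC HCb]].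
  exists (Rmax 0 (- 2 * ln (eps / C))). intros y Hy.
  pose proof (Rmax_l 0 (- 2 * ln (eps / C))). pose proof (Rmax_r 0 (- 2 * ln (eps / C))).
  apply Rle_lt_trans with (C * exp (- y / 2)); [apply HCb; lra|].
  assert (exp (- y / 2) < eps / C).
  { rewrite <- (exp_ln (eps / C)) by (apply Rdiv_lt_0_compat; lra).
    apply exp_increasing. lra. }
  replace eps with (C * (eps / C)) by (field; lra).
  apply Rmult_lt_compat_l; lra.
Qed.

Lemma is_derive_gamma_kernel_succ a x : 0 < a ->
  is_derive (gamma_kernel (a + 1)) x ((a + 1) * gamma_kernel a x - gamma_kernel (a + 1) x).
Proof.
  intros Ha. unfold gamma_kernel.
  pose proof (is_derive_xpow (a + 1) x ltac:(lra)) as Hx.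
  replace (a + 1 - 1) with a in Hx by ring.
  evar (l : R). replace (_ - _) with l.
  - apply (is_derive_mult (fun y => xpow y (a + 1)) (fun y => exp (- y))); [exact Hx| |].
    + auto_derive; [exact I|reflexivity].
    + intros; apply Rmult_comm.
  - unfold l. simpl. unfold plus, mult; simpl. ring.
Qed.

Section RInt_gen_R.
Context {Fa Fb : (R -> Prop) -> Prop} {FFa : Filter Fa} {FFb : Filter Fb}.

Lemma is_RInt_gen_ext_eq (f g : R -> R) l : (forall x, f x = g x) ->
  is_RInt_gen f Fa Fb l -> is_RInt_gen g Fa Fb l.
Proof. intros H. apply is_RInt_gen_ext, filter_forall. intros ab x _. apply H. Qed.

Lemma is_RInt_gen_Rplus (f g : R -> R) lf lg : is_RInt_gen f Fa Fb lf -> is_RInt_gen g Fa Fb lg ->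
  is_RInt_gen (fun x => f x + g x) Fa Fb (lf + lg).
Proof. intros H1 H2. apply (is_RInt_gen_plus _ _ _ _ H1 H2). Qed.

Lemma is_RInt_gen_Rscal (f : R -> R) k l : is_RInt_gen f Fa Fb l ->
  is_RInt_gen (fun x => k * f x) Fa Fb (k * l).
Proof. intros H. apply (is_RInt_gen_scal _ _ _ H). Qed.

End RInt_gen_R.

Lemma is_RInt_gen_eq (f : R -> R) s l1 l2 :
  is_RInt_gen f (at_point s) (Rbar_locally p_infty) l1 ->
  is_RInt_gen f (at_point s) (Rbar_locally p_infty) l2 -> l1 = l2.
Proof. intros H1 H2. rewrite <- (is_RInt_gen_unique _ _ H1). apply is_RInt_gen_unique, H2. Qed.

Lemma monotone_bounded_cvg (F : R -> R) s M :
  (forall y z, s <= y -> y <= z -> F y <= F z) -> (forall y, s <= y -> F y <= M) ->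
  exists l, filterlim F (Rbar_locally p_infty) (locally l).
Proof.
  intros Hm Hb.
  set (E := fun v => exists y, s <= y /\ v = F y).
  assert (HE : bound E) by (exists M; intros v [y [Hy ->]]; apply Hb; exact Hy).
  assert (HE2 : exists v, E v) by (exists (F s); exists s; split; [lra|reflexivity]).
  destruct (completeness E HE HE2) as [l [Hub Hlub]].
  exists l. apply filterlim_locally. intros eps.
  assert (Hex : exists y, s <= y /\ l - eps < F y).
  { apply Classical_Prop.NNPP. intros Hn.
    assert (l <= l - eps).
    { apply Hlub. intros v [y [Hy ->]].
      destruct (Rle_dec (F y) (l - eps)) as [H|H]; [exact H|].
      exfalso. apply Hn. exists y. split; [exact Hy|lra]. }
    pose proof (cond_pos eps). lra. }
  destruct Hex as [y0 [Hy0 Hly]].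
  exists y0. intros y Hy.
  assert (F y <= l) by (apply Hub; exists y; split; [lra|reflexivity]).
  assert (F y0 <= F y) by (apply Hm; lra).
  apply Rabs_def1; unfold minus, plus, opp; simpl; lra.
Qed.

Lemma is_RInt_gen_of_partial (g : R -> R) s (F : R -> R) l :
  (forall y, s < y -> is_RInt g s y (F y)) ->
  filterlim F (Rbar_locally p_infty) (locally l) ->
  is_RInt_gen g (at_point s) (Rbar_locally p_infty) l.
Proof.
  intros HI HF P HP. destruct (HF P HP) as [M HM].
  apply Filter_prod with (fun a => a = s) (fun b => Rmax M s < b).
  - reflexivity.
  - exists (Rmax M s). intros x Hx; exact Hx.
  - intros a b Ha Hb. simpl. subst a. exists (F b). split.
    + apply HI. pose proof (Rmax_r M s). lra.
    + apply HM. pose proof (Rmax_l M s). lra.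
Qed.

Lemma is_RInt_exp_half C s y :
  is_RInt (fun x => C * exp (- x / 2)) s y (- 2 * C * exp (- y / 2) - (- 2 * C * exp (- s / 2))).
Proof.
  apply (is_RInt_derive (fun x => - 2 * C * exp (- x / 2))).
  - intros x _. auto_derive; [exact I|].
    change (-2 * C * (- (1) * / 2 * exp (- x * / 2)) = C * exp (- x / 2)). unfold Rdiv. field.
  - intros x _. apply (ex_derive_continuous (fun x => C * exp (- x / 2))). auto_derive. exact I.
Qed.

Lemma upper_gamma_exists a s : 0 < a -> 0 <= s ->
  exists l, is_RInt_gen (gamma_kernel a) (at_point s) (Rbar_locally p_infty) l.
Proof.
  intros Ha Hs. destruct (gamma_kernel_exp_bound a Ha) as [C [HC HCb]].
  set (F := fun y => RInt (gamma_kernel a) s y).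
  destruct (monotone_bounded_cvg F s (2 * C * exp (- s / 2))) as [l Hl].
  - intros y z Hy Hz. unfold F.
    rewrite <- (RInt_Chasles (gamma_kernel a) s y z) by (apply ex_RInt_gamma_kernel; exact Ha).
    assert (0 <= RInt (gamma_kernel a) y z).
    { apply RInt_ge_0; [exact Hz|apply ex_RInt_gamma_kernel; exact Ha|]. intros; apply gamma_kernel_ge0. }
    simpl. unfold plus; simpl. lra.
  - intros y Hy. unfold F.
    apply Rle_trans with (RInt (fun x => C * exp (- x / 2)) s y).
    + apply RInt_le; [exact Hy|apply ex_RInt_gamma_kernel; exact Ha| |].
      * eexists. apply is_RInt_exp_half.
      * intros x Hx. apply HCb. lra.
    + rewrite (is_RInt_unique _ _ _ _ (is_RInt_exp_half C s y)).
      pose proof (exp_pos (- y / 2)). nra.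
  - exists l. apply (is_RInt_gen_of_partial _ _ F); [|exact Hl].
    intros y Hy. apply (@RInt_correct R_CompleteNormedModule). apply ex_RInt_gamma_kernel; exact Ha.
Qed.

Definition upper_gamma (a s : R) : R :=
  RInt_gen (gamma_kernel a) (at_point s) (Rbar_locally p_infty).

Lemma upper_gamma_correct a s : 0 < a -> 0 <= s ->
  is_RInt_gen (gamma_kernel a) (at_point s) (Rbar_locally p_infty) (upper_gamma a s).
Proof.
  intros Ha Hs. destruct (upper_gamma_exists a s Ha Hs) as [l Hl].
  unfold upper_gamma. rewrite (is_RInt_gen_unique _ l Hl). exact Hl.
Qed.

Lemma upper_gamma_succ a s : 0 < a -> 0 <= s ->
  upper_gamma (a + 1) s = (a + 1) * upper_gamma a s + gamma_kernel (a + 1) s.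
Proof.
  intros Ha Hs.
  set (dg := fun x => (a + 1) * gamma_kernel a x - gamma_kernel (a + 1) x).
  assert (HD : forall x, Derive (gamma_kernel (a + 1)) x = dg x)
    by (intros x; apply is_derive_unique, is_derive_gamma_kernel_succ, Ha).
  assert (Hdg : is_RInt_gen (Derive (gamma_kernel (a + 1))) (at_point s) (Rbar_locally p_infty)
                  (0 - gamma_kernel (a + 1) s)).
  { apply is_RInt_gen_Derive.
    - apply filter_forall. intros _ x _. eexists. apply is_derive_gamma_kernel_succ, Ha.
    - apply filter_forall. intros _ x _. apply continuous_ext with dg; [intros; symmetry; apply HD|].
      apply (continuous_minus (fun y => (a + 1) * gamma_kernel a y)).
      + apply (continuous_scal_r (a + 1) (gamma_kernel a)), continuous_gamma_kernel, Ha.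
      + apply continuous_gamma_kernel. lra.
    - intros P HP. exact (locally_singleton _ _ HP).
    - apply filterlim_locally. intros eps.
      destruct (gamma_kernel_vanishes_at_infty (a + 1) ltac:(lra) eps (cond_pos eps)) as [M HM].
      exists M. intros y Hy. apply Rabs_def1; unfold minus, plus, opp; simpl;
        pose proof (HM y Hy); pose proof (gamma_kernel_ge0 (a + 1) y); lra. }
  assert (Hsucc : is_RInt_gen (gamma_kernel (a + 1)) (at_point s) (Rbar_locally p_infty)
                    ((a + 1) * upper_gamma a s + (-1) * (0 - gamma_kernel (a + 1) s))).
  { apply is_RInt_gen_ext_eq with
      (fun x => (a + 1) * gamma_kernel a x + (-1) * Derive (gamma_kernel (a + 1)) x).
    - intros x. rewrite HD. unfold dg. ring.
    - apply is_RInt_gen_Rplus; apply is_RInt_gen_Rscal; [apply upper_gamma_correct; lra|exact Hdg]. }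
  rewrite (is_RInt_gen_eq _ _ _ _ (upper_gamma_correct (a + 1) s ltac:(lra) Hs) Hsucc).
  ring.
Qed.

Lemma upper_gamma_split a u : 0 < a -> 0 <= u ->
  upper_gamma a 0 = RInt (gamma_kernel a) 0 u + upper_gamma a u.
Proof.
  intros Ha Hu.
  assert (H1 : is_RInt_gen (gamma_kernel a) (at_point 0) (at_point u) (RInt (gamma_kernel a) 0 u)).
  { apply is_RInt_gen_at_point, (@RInt_correct R_CompleteNormedModule), ex_RInt_gamma_kernel, Ha. }
  pose proof (is_RInt_gen_Chasles (gamma_kernel a) u _ _ H1 (upper_gamma_correct a u Ha Hu)) as H.
  apply (is_RInt_gen_eq _ _ _ _ (upper_gamma_correct a 0 Ha (Rle_refl 0)) H).
Qed.

Lemma upper_gamma_derive a s : 0 < a -> 0 < s ->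
  is_derive (fun u => upper_gamma a u) s (- gamma_kernel a s).
Proof.
  intros Ha Hs.
  apply is_derive_ext_loc with (fun u => upper_gamma a 0 - RInt (gamma_kernel a) 0 u).
  - apply (filter_imp (fun y => 0 < y)); [|exact (open_gt 0 s Hs)].
    intros y Hy. cbv beta. rewrite (upper_gamma_split a y Ha) by lra. lra.
  - replace (- gamma_kernel a s) with (0 - gamma_kernel a s) by ring.
    apply (@is_derive_minus R_AbsRing R_NormedModule (fun _ => upper_gamma a 0) (RInt (gamma_kernel a) 0)).
    + apply is_derive_Reals, derivable_pt_lim_const.
    + apply (is_derive_RInt (gamma_kernel a) (RInt (gamma_kernel a) 0) 0 s).
      * apply filter_forall. intros y.
        apply (@RInt_correct R_CompleteNormedModule), ex_RInt_gamma_kernel, Ha.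
      * apply continuous_gamma_kernel, Ha.
Qed.

Lemma is_RInt_gen_theta_gamma_kernel a s : 0 < a -> 0 < s ->
  is_RInt_gen (fun x => theta (x - s) * gamma_kernel a x) (at_point 0) (Rbar_locally p_infty)
    (upper_gamma a s).
Proof.
  intros Ha Hs.
  replace (upper_gamma a s) with (plus 0 (upper_gamma a s)) by (unfold plus; simpl; ring).
  eapply (@is_RInt_gen_Chasles R_NormedModule _ _ _ _ _ s).
  - apply is_RInt_gen_at_point.
    replace 0 with (scal (s - 0) 0) at 2 by apply (@scal_zero_r R_AbsRing R_NormedModule).
    apply is_RInt_ext with (fun _ => 0); [|apply (@is_RInt_const R_NormedModule)].
    intros x Hx. rewrite Rmin_left, Rmax_right in Hx by lra.
    unfold theta. destruct (Rlt_dec 0 (x - s)); [lra|]. symmetry. apply Rmult_0_l.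
  - apply is_RInt_gen_ext with (gamma_kernel a); [|apply upper_gamma_correct; lra].
    apply Filter_prod with (fun b => b = s) (fun c => s < c).
    + reflexivity.
    + exists s. intros; assumption.
    + intros b c Hb Hc x Hx. simpl in Hx. subst b.
      rewrite Rmin_left, Rmax_right in Hx by lra.
      unfold theta. destruct (Rlt_dec 0 (x - s)); [|lra]. symmetry. apply Rmult_1_l.
Qed.

Definition moment (al A B : R) (k : nat) (s : R) : R :=
  A * upper_gamma (INR k + al) 0 + B * upper_gamma (INR k + al) s.

Lemma moment_correct al A B k s : 0 < al -> 0 < s ->
  is_RInt_gen (fun x => x ^ k * weight al A B s x) (at_point 0) (Rbar_locally p_infty)
    (moment al A B k s).
Proof.
  intros Hal Hs. assert (Hk : 0 < INR k + al) by (pose proof (pos_INR k); lra).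
  apply is_RInt_gen_ext_eq with
    (fun x => A * gamma_kernel (INR k + al) x + B * (theta (x - s) * gamma_kernel (INR k + al) x)).
  - intros x. unfold weight, gamma_kernel. rewrite <- pow_mul_xpow. ring.
  - apply is_RInt_gen_Rplus; apply is_RInt_gen_Rscal;
      [apply upper_gamma_correct|apply is_RInt_gen_theta_gamma_kernel]; lra.
Qed.

Lemma moment_succ al A B k s : 0 < al -> 0 < s ->
  moment al A B (S k) s = (INR k + 1 + al) * moment al A B k s + B * s ^ (S k) * xpow s al * exp (- s).
Proof.
  intros Hal Hs. assert (Hk : 0 < INR k + al) by (pose proof (pos_INR k); lra).
  unfold moment. rewrite S_INR.
  replace (INR k + 1 + al) with ((INR k + al) + 1) by ring.
  rewrite !upper_gamma_succ by lra.
  unfold gamma_kernel. rewrite (xpow_nonpos 0) by lra.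
  replace (INR k + al + 1) with (INR (S k) + al) by (rewrite S_INR; ring).
  rewrite <- (pow_mul_xpow s (S k) al). ring.
Qed.

Lemma moment_derive al A B k s : 0 < al -> 0 < s ->
  is_derive (moment al A B k) s (- (B * s ^ k * xpow s al * exp (- s))).
Proof.
  intros Hal Hs. assert (Hk : 0 < INR k + al) by (pose proof (pos_INR k); lra).
  apply is_derive_Reals.
  replace (- (B * s ^ k * xpow s al * exp (- s))) with (0 + B * (- gamma_kernel (INR k + al) s))
    by (unfold gamma_kernel; rewrite <- pow_mul_xpow; ring).
  apply derivable_pt_lim_plus; [apply derivable_pt_lim_const|].
  apply derivable_pt_lim_scal, is_derive_Reals, upper_gamma_derive; lra.
Qed.

Fixpoint fsum (g : nat -> R) (N : nat) : R :=
  match N with O => 0 | S k => fsum g k + g k end.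

Lemma psum_fsum c N x : psum c N x = fsum (fun k => c k * x ^ k) N.
Proof. induction N; simpl; [reflexivity|rewrite IHN; reflexivity]. Qed.

Lemma fsum_ext g h N : (forall k, (k < N)%nat -> g k = h k) -> fsum g N = fsum h N.
Proof.
  induction N; intros H; simpl; [reflexivity|].
  rewrite IHN, H by (try intros; try apply H; lia). reflexivity.
Qed.

Lemma fsum_plus g h N : fsum (fun k => g k + h k) N = fsum g N + fsum h N.
Proof. induction N; simpl; [ring|rewrite IHN; ring]. Qed.

Lemma fsum_minus g h N : fsum (fun k => g k - h k) N = fsum g N - fsum h N.
Proof. induction N; simpl; [ring|rewrite IHN; ring]. Qed.

Lemma fsum_scal a g N : fsum (fun k => a * g k) N = a * fsum g N.
Proof. induction N; simpl; [ring|rewrite IHN; ring]. Qed.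

Lemma fsum_zero N : fsum (fun _ => 0) N = 0.
Proof. induction N; simpl; [ring|rewrite IHN; ring]. Qed.

Lemma fsum_pad g N M : (N <= M)%nat -> fsum g N = fsum (fun k => if (k <? N)%nat then g k else 0) M.
Proof.
  intros H. induction M.
  - assert (N = 0%nat) by lia. subst. reflexivity.
  - destruct (Nat.eq_dec N (S M)) as [E|E].
    + subst N. simpl. f_equal.
      * apply fsum_ext. intros k Hk. destruct (k <? S M)%nat eqn:Ek; [reflexivity|].
        apply Nat.ltb_ge in Ek. lia.
      * destruct (M <? S M)%nat eqn:Ek; [reflexivity|]. apply Nat.ltb_ge in Ek. lia.
    + simpl. rewrite <- IHM by lia. destruct (M <? N)%nat eqn:Ek; [apply Nat.ltb_lt in Ek; lia|ring].
Qed.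

Lemma fsum_shift g N : fsum g (S N) = g O + fsum (fun k => g (S k)) N.
Proof. induction N; simpl in *; [ring|]. rewrite IHN. ring. Qed.

Definition poly_lt (N : nat) (f : R -> R) : Prop := exists c : nat -> R, forall x, f x = psum c N x.
Definition is_poly (f : R -> R) : Prop := exists N, poly_lt N f.

Lemma poly_lt_ext N f g : (forall x, f x = g x) -> poly_lt N f -> poly_lt N g.
Proof. intros H [c Hc]. exists c. intros x. rewrite <- H. apply Hc. Qed.

Lemma poly_lt_mono N M f : (N <= M)%nat -> poly_lt N f -> poly_lt M f.
Proof.
  intros H [c Hc]. exists (fun k => if (k <? N)%nat then c k else 0). intros x.
  rewrite Hc, !psum_fsum, (fsum_pad _ N M H). apply fsum_ext. intros k _.
  destruct (k <? N)%nat; ring.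
Qed.

Lemma poly_lt_plus N f g : poly_lt N f -> poly_lt N g -> poly_lt N (fun x => f x + g x).
Proof.
  intros [c Hc] [d Hd]. exists (fun k => c k + d k). intros x.
  rewrite Hc, Hd, !psum_fsum, <- fsum_plus. apply fsum_ext. intros; ring.
Qed.

Lemma poly_lt_scal N a f : poly_lt N f -> poly_lt N (fun x => a * f x).
Proof.
  intros [c Hc]. exists (fun k => a * c k). intros x.
  rewrite Hc, !psum_fsum, <- fsum_scal. apply fsum_ext. intros; ring.
Qed.

Lemma poly_lt_zero N : poly_lt N (fun _ => 0).
Proof. exists (fun _ => 0). intros x. rewrite psum_fsum. symmetry.
  transitivity (fsum (fun _ => 0) N); [apply fsum_ext; intros; ring|apply fsum_zero]. Qed.

Definition shiftc (c : nat -> R) (k : nat) : R := match k with O => 0 | S j => c j end.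

Lemma psum_mulx c N x : x * psum c N x = psum (shiftc c) (S N) x.
Proof.
  rewrite !psum_fsum, fsum_shift. simpl. rewrite Rmult_0_l, Rplus_0_l.
  rewrite <- fsum_scal. apply fsum_ext. intros; ring.
Qed.

Lemma poly_lt_mulx N f : poly_lt N f -> poly_lt (S N) (fun x => x * f x).
Proof. intros [c Hc]. exists (shiftc c). intros x. rewrite Hc. apply psum_mulx. Qed.

Lemma psum_top c N x : psum c (S N) x = psum c N x + c N * x ^ N.
Proof. reflexivity. Qed.

Lemma psum_0 N x : psum (fun _ => 0) N x = 0.
Proof. induction N; simpl; [ring|rewrite IHN; ring]. Qed.

Lemma psum_ext c d N x : (forall k, (k < N)%nat -> c k = d k) -> psum c N x = psum d N x.
Proof. intros H. rewrite !psum_fsum. apply fsum_ext. intros k Hk. rewrite H by exact Hk. reflexivity. Qed.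

Lemma poly_lt_const c : poly_lt 1 (fun _ => c).
Proof. exists (fun _ => c). intros x. simpl. ring. Qed.

Lemma poly_lt_pow j : poly_lt (S j) (fun x => x ^ j).
Proof.
  induction j.
  - apply poly_lt_ext with (fun _ => 1); [intros; simpl; ring|apply poly_lt_const].
  - apply (poly_lt_mulx (S j) (fun x => x ^ j)) in IHj. destruct IHj as [c Hc].
    exists c. intros x. rewrite <- Hc. reflexivity.
Qed.

Lemma poly_lt_psum c N : poly_lt N (psum c N).
Proof. exists c. reflexivity. Qed.

Lemma poly_lt_mulpow N j f : poly_lt N f -> poly_lt (N + j) (fun x => x ^ j * f x).
Proof.
  intros H. induction j.
  - rewrite Nat.add_0_r. apply poly_lt_ext with f; [intros; simpl; ring|exact H].
  - replace (N + S j)%nat with (S (N + j)) by lia.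
    apply poly_lt_ext with (fun x => x * (x ^ j * f x)); [intros; simpl; ring|].
    apply poly_lt_mulx. exact IHj.
Qed.

Lemma poly_lt_mult N M f g : poly_lt N f -> poly_lt M g -> poly_lt (N + M) (fun x => f x * g x).
Proof.
  intros Hf [d Hd]. apply poly_lt_ext with (fun x => f x * psum d M x).
  { intros; rewrite Hd; reflexivity. }
  clear Hd g. induction M.
  - simpl. apply poly_lt_ext with (fun _ => 0); [intros; ring|apply poly_lt_zero].
  - simpl. apply poly_lt_ext with (fun x => f x * psum d M x + d M * (x ^ M * f x)).
    { intros; ring. }
    apply poly_lt_plus.
    + apply poly_lt_mono with (N + M)%nat; [lia|exact IHM].
    + apply poly_lt_scal. apply poly_lt_mono with (N + M)%nat; [lia|]. apply poly_lt_mulpow; exact Hf.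
Qed.

Lemma is_poly_plus f g : is_poly f -> is_poly g -> is_poly (fun x => f x + g x).
Proof.
  intros [N Hf] [M Hg]. exists (N + M)%nat. apply poly_lt_plus.
  - apply poly_lt_mono with N; [lia|exact Hf].
  - apply poly_lt_mono with M; [lia|exact Hg].
Qed.

Lemma is_poly_mult f g : is_poly f -> is_poly g -> is_poly (fun x => f x * g x).
Proof. intros [N Hf] [M Hg]. exists (N + M)%nat. apply poly_lt_mult; assumption. Qed.

Lemma is_poly_const c : is_poly (fun _ => c).
Proof. exists 1%nat. apply poly_lt_const. Qed.

Lemma is_poly_id : is_poly (fun x => x).
Proof. exists 2%nat. apply poly_lt_ext with (fun x => x ^ 1); [intros; simpl; ring|apply poly_lt_pow]. Qed.

Lemma is_poly_pow j : is_poly (fun x => x ^ j).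
Proof. exists (S j). apply poly_lt_pow. Qed.

Lemma is_poly_minus f g : is_poly f -> is_poly g -> is_poly (fun x => f x - g x).
Proof.
  intros Hf Hg. apply is_poly_plus with (g := fun x => - g x); [exact Hf|].
  destruct (is_poly_mult (fun _ => -1) g (is_poly_const (-1)) Hg) as [N HN].
  exists N. apply poly_lt_ext with (fun x => -1 * g x); [intros; ring|exact HN].
Qed.

Lemma is_poly_ext f g : (forall x, f x = g x) -> is_poly f -> is_poly g.
Proof. intros H [N HN]. exists N. apply poly_lt_ext with f; assumption. Qed.

Lemma is_poly_psum c N : is_poly (fun x => psum c N x).
Proof. exists N; apply poly_lt_psum. Qed.

Create HintDb is_poly.
#[export] Hint Resolve is_poly_psum : is_poly.

Ltac is_poly_tac := repeat match goal with
  | |- is_poly (fun x => @?f x + @?g x) => apply (is_poly_plus f g)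
  | |- is_poly (fun x => @?f x - @?g x) => apply (is_poly_minus f g)
  | |- is_poly (fun x => @?f x * @?g x) => apply (is_poly_mult f g)
  | |- is_poly (fun x => ?c) => apply is_poly_const
  | |- is_poly (fun x => x) => apply is_poly_id
  | |- is_poly (fun x => x ^ ?j) => apply is_poly_pow
  | |- is_poly (fun x => @?f x ^ 2) => apply (is_poly_ext (fun x => f x * f x)); [intros; simpl; ring|]
  | |- is_poly (fun x => - @?f x) => apply (is_poly_ext (fun x => (-1) * f x)); [intros; ring|]
  end; try solve [eauto with is_poly].

Fixpoint psum_deriv (c : nat -> R) (N : nat) (x : R) : R :=
  match N with O => 0 | S k => psum_deriv c k x + c k * (INR k * x ^ (Nat.pred k)) end.

Lemma is_derive_psum c N x : is_derive (psum c N) x (psum_deriv c N x).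
Proof.
  induction N; simpl.
  - apply is_derive_Reals, derivable_pt_lim_const.
  - apply is_derive_Reals. apply derivable_pt_lim_plus.
    + apply is_derive_Reals. exact IHN.
    + apply derivable_pt_lim_scal. apply derivable_pt_lim_pow.
Qed.

Lemma mul_x_psum_deriv c N x : x * psum_deriv c N x = psum (fun k => INR k * c k) N x.
Proof.
  induction N; simpl; [ring|]. rewrite <- IHN.
  destruct N; simpl; ring.
Qed.

Lemma ex_derive_psum c N x : ex_derive (psum c N) x.
Proof. eexists; apply is_derive_psum. Qed.

Lemma ex_derive_poly_lt N f x : poly_lt N f -> ex_derive f x.
Proof.
  intros [c Hc]. apply ex_derive_ext with (psum c N); [intros; rewrite Hc; reflexivity|].
  apply ex_derive_psum.
Qed.

Lemma ex_derive_is_poly f x : is_poly f -> ex_derive f x.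
Proof. intros [N H]; apply ex_derive_poly_lt with N; exact H. Qed.

Lemma x_Derive_psum c N f : (forall x, f x = psum c N x) ->
  forall x, x * Derive f x = psum (fun k => INR k * c k) N x.
Proof.
  intros Hf x. rewrite (Derive_ext f (psum c N)) by (intros; apply Hf).
  rewrite (is_derive_unique _ _ _ (is_derive_psum c N x)). apply mul_x_psum_deriv.
Qed.


Lemma fsum_abs_ge0 (c : nat -> R) j : 0 <= fsum (fun k => Rabs (c k)) j.
Proof. induction j; simpl; [lra|]. pose proof (Rabs_pos (c j)). lra. Qed.

Lemma psum_abs_bound c j x : 1 <= x ->
  Rabs (psum c j x) <= fsum (fun k => Rabs (c k)) j * x ^ (Nat.pred j).
Proof.
  intros Hx. induction j; simpl.
  - rewrite Rabs_R0; lra.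
  - eapply Rle_trans; [apply Rabs_triang|]. rewrite Rabs_mult, <- RPow_abs, (Rabs_pos_eq x) by lra.
    assert (Hp : x ^ Nat.pred j <= x ^ j).
    { destruct j; simpl; [lra|]. pose proof (pow_le x j ltac:(lra)). nra. }
    pose proof (Rabs_pos (c j)). pose proof (fsum_abs_ge0 c j).
    pose proof (pow_le x (Nat.pred j) ltac:(lra)).
    nra.
Qed.

Lemma monic_ge_1 c j x : 1 + fsum (fun k => Rabs (c k)) j <= x -> 1 <= x ^ j + psum c j x.
Proof.
  intros Hx. pose proof (fsum_abs_ge0 c j).
  pose proof (psum_abs_bound c j x ltac:(lra)) as Hb.
  pose proof (Rle_abs (- psum c j x)) as Hb2. rewrite Rabs_Ropp in Hb2.
  destruct j as [|j].
  - simpl. lra.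
  - simpl Nat.pred in Hb. simpl pow.
    pose proof (pow_le x j ltac:(lra)).
    assert (1 <= x ^ j) by (apply pow_R1_Rle; lra).
    nra.
Qed.

Lemma is_RInt_gen_ge_bump (f : R -> R) l d X : 0 <= X ->
  (forall x, 0 <= f x) -> (forall x, X <= x <= X + 1 -> d <= f x) ->
  is_RInt_gen f (at_point 0) (Rbar_locally p_infty) l -> d <= l.
Proof.
  intros HX Hf0 Hfd Hint.
  destruct (Rle_dec d l) as [Hle|Hlt]; [exact Hle|exfalso].
  assert (HP : locally l (fun y => y < d)) by (apply open_lt; lra).
  destruct (Hint _ HP) as [Q R' HQ [M HM] HQR].
  set (b := Rmax M (X + 1) + 1).
  assert (HbM : M < b) by (unfold b; pose proof (Rmax_l M (X + 1)); lra).
  assert (HbX : X + 1 < b) by (unfold b; pose proof (Rmax_r M (X + 1)); lra).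
  destruct (HQR 0 b HQ (HM b HbM)) as [y [Hy Hyd]]. simpl in Hy.
  assert (He : ex_RInt f 0 b) by (exists y; exact Hy).
  assert (He1 : ex_RInt f 0 X) by (apply (ex_RInt_Chasles_1 f 0 X b); [lra|exact He]).
  assert (He23 : ex_RInt f X b) by (apply (ex_RInt_Chasles_2 f 0 X b); [lra|exact He]).
  assert (He2 : ex_RInt f X (X + 1)) by (apply (ex_RInt_Chasles_1 f X (X + 1) b); [lra|exact He23]).
  assert (He3 : ex_RInt f (X + 1) b) by (apply (ex_RInt_Chasles_2 f X (X + 1) b); [lra|exact He23]).
  rewrite <- (is_RInt_unique _ _ _ _ Hy) in Hyd.
  rewrite <- (RInt_Chasles f 0 X b He1 He23), <- (RInt_Chasles f X (X + 1) b He2 He3) in Hyd.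
  assert (H1 : 0 <= RInt f 0 X) by (apply RInt_ge_0; [lra|exact He1|intros; apply Hf0]).
  assert (H3 : 0 <= RInt f (X + 1) b) by (apply RInt_ge_0; [lra|exact He3|intros; apply Hf0]).
  assert (H2 : RInt (fun _ => d) X (X + 1) <= RInt f X (X + 1)).
  { apply RInt_le; [lra|apply ex_RInt_const|exact He2|]. intros x Hx. apply Hfd. lra. }
  rewrite RInt_const in H2. unfold scal in H2; simpl in H2; unfold mult in H2; simpl in H2.
  unfold plus in Hyd; simpl in Hyd. lra.
Qed.

Section WeightedIntegral.
Variables al A B s : R.
Hypothesis Hal : 0 < al.
Hypothesis HA : 0 <= A.
Hypothesis HB : 0 < B.
Hypothesis Hs : 0 < s.

Local Notation w := (weight al A B s).

Definition wint (f : R -> R) : R := int0inf (fun x => f x * w x).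

Definition jump : R := B * xpow s al * exp (- s).

Lemma is_RInt_gen_zero : is_RInt_gen (fun _ => 0) (at_point 0) (Rbar_locally p_infty) 0.
Proof.
  apply is_RInt_gen_ext_eq with (fun x => 0 * (x ^ 0 * w x)); [intros; ring|].
  replace 0 with (0 * moment al A B 0 s) at 2 by ring.
  apply is_RInt_gen_Rscal, moment_correct; assumption.
Qed.

Lemma is_RInt_gen_psum_weight c N :
  is_RInt_gen (fun x => psum c N x * w x) (at_point 0) (Rbar_locally p_infty)
    (fsum (fun k => c k * moment al A B k s) N).
Proof.
  induction N; simpl.
  - apply is_RInt_gen_ext_eq with (fun _ => 0); [intros; ring|apply is_RInt_gen_zero].
  - apply is_RInt_gen_ext_eq with (fun x => psum c N x * w x + c N * (x ^ N * w x)); [intros; ring|].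
    apply is_RInt_gen_Rplus; [exact IHN|]. apply is_RInt_gen_Rscal, moment_correct; assumption.
Qed.

Lemma wint_psum f c N : (forall x, f x = psum c N x) ->
  wint f = fsum (fun k => c k * moment al A B k s) N.
Proof.
  intros H. unfold wint, int0inf. apply is_RInt_gen_unique.
  apply is_RInt_gen_ext_eq with (fun x => psum c N x * w x); [intros; rewrite H; reflexivity|].
  apply is_RInt_gen_psum_weight.
Qed.

Lemma wint_correct f : is_poly f ->
  is_RInt_gen (fun x => f x * w x) (at_point 0) (Rbar_locally p_infty) (wint f).
Proof.
  intros [N [c Hc]]. rewrite (wint_psum f c N Hc).
  apply is_RInt_gen_ext_eq with (fun x => psum c N x * w x); [intros; rewrite Hc; reflexivity|].
  apply is_RInt_gen_psum_weight.
Qed.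

Lemma wint_ext f g : (forall x, f x = g x) -> wint f = wint g.
Proof. intros H. unfold wint. f_equal. apply functional_extensionality. intros x. rewrite H. reflexivity. Qed.

Lemma wint_plus f g : is_poly f -> is_poly g -> wint (fun x => f x + g x) = wint f + wint g.
Proof.
  intros Hf Hg. unfold wint at 1, int0inf. apply is_RInt_gen_unique.
  apply is_RInt_gen_ext_eq with (fun x => f x * w x + g x * w x); [intros; ring|].
  apply is_RInt_gen_Rplus; apply wint_correct; assumption.
Qed.

Lemma wint_scal a f : is_poly f -> wint (fun x => a * f x) = a * wint f.
Proof.
  intros Hf. unfold wint at 1, int0inf. apply is_RInt_gen_unique.
  apply is_RInt_gen_ext_eq with (fun x => a * (f x * w x)); [intros; ring|].
  apply is_RInt_gen_Rscal, wint_correct, Hf.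
Qed.

Lemma wint_zero : wint (fun _ => 0) = 0.
Proof.
  unfold wint, int0inf. apply is_RInt_gen_unique.
  apply is_RInt_gen_ext_eq with (fun _ => 0); [intros; ring|apply is_RInt_gen_zero].
Qed.

(** Integration by parts, read off from [moment_succ] coefficientwise. *)
Lemma wint_by_parts f c N : (forall x, f x = psum c N x) ->
  wint (fun x => f x + x * Derive f x) = wint (fun x => x * f x) - al * wint f - s * jump * f s.
Proof.
  intros Hf.
  rewrite (wint_psum (fun x => f x + x * Derive f x) (fun k => (INR k + 1) * c k) N).
  2:{ intros x. rewrite (x_Derive_psum c N f Hf x), Hf, !psum_fsum, <- fsum_plus.
      apply fsum_ext; intros; ring. }
  rewrite (wint_psum (fun x => x * f x) (shiftc c) (S N)) by (intros x; rewrite Hf; apply psum_mulx).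
  rewrite (wint_psum f c N Hf), Hf, fsum_shift, psum_fsum. simpl. rewrite Rmult_0_l, Rplus_0_l.
  unfold jump. rewrite <- !fsum_scal, <- !fsum_minus. apply fsum_ext. intros k _.
  rewrite moment_succ by assumption. simpl. ring.
Qed.

Lemma weight_ge0 x : 0 <= w x.
Proof.
  unfold weight. apply Rmult_le_pos; [apply Rmult_le_pos; [apply xpow_ge0|left; apply exp_pos]|].
  unfold theta. destruct (Rlt_dec 0 (x - s)); lra.
Qed.

Lemma monic_sq_weight_ge c j x :
  let X := 1 + s + fsum (fun k => Rabs (c k)) j in
  X <= x <= X + 1 -> B * exp (- (X + 1)) <= (x ^ j + psum c j x) ^ 2 * w x.
Proof.
  intros X Hx. pose proof (fsum_abs_ge0 c j).
  assert (Hq : 1 <= x ^ j + psum c j x) by (apply monic_ge_1; unfold X in Hx; lra).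
  assert (Hxp : 1 <= xpow x al).
  { rewrite xpow_pos by (unfold X in Hx; lra). unfold Rpower. rewrite <- exp_0.
    apply exp_le_compat. assert (0 <= ln x) by (rewrite <- ln_1; apply ln_le; unfold X in Hx; lra).
    nra. }
  assert (Hth : theta (x - s) = 1)
    by (unfold theta; destruct (Rlt_dec 0 (x - s)); [reflexivity|unfold X in Hx; lra]).
  unfold weight. rewrite Hth.
  assert (He : exp (- (X + 1)) <= exp (- x)) by (apply exp_le_compat; lra).
  pose proof (exp_pos (- x)). pose proof (exp_pos (- (X + 1))).
  assert (Hexp : exp (- (X + 1)) <= xpow x al * exp (- x)) by nra.
  assert (1 <= (x ^ j + psum c j x) ^ 2) by nra.
  assert (Hu : B * exp (- (X + 1)) <= xpow x al * exp (- x) * (A + B * 1)).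
  { rewrite Rmult_comm. apply Rmult_le_compat; lra. }
  set (u := xpow x al * exp (- x) * (A + B * 1)) in *.
  assert (0 <= u) by nra.
  apply Rle_trans with u; [exact Hu|]. rewrite <- (Rmult_1_l u) at 1.
  apply Rmult_le_compat_r; lra.
Qed.

Lemma wint_monic_sq_pos c j : 0 < wint (fun x => (x ^ j + psum c j x) ^ 2).
Proof.
  set (X := 1 + s + fsum (fun k => Rabs (c k)) j).
  assert (Hd : 0 < B * exp (- (X + 1))) by (pose proof (exp_pos (- (X + 1))); nra).
  eapply Rlt_le_trans; [exact Hd|].
  apply (is_RInt_gen_ge_bump (fun x => (x ^ j + psum c j x) ^ 2 * w x) _ _ X).
  - pose proof (fsum_abs_ge0 c j). unfold X. lra.
  - intros x. apply Rmult_le_pos; [apply pow2_ge_0|apply weight_ge0].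
  - apply monic_sq_weight_ge.
  - apply (wint_correct (fun x => (x ^ j + psum c j x) ^ 2)). is_poly_tac.
Qed.

End WeightedIntegral.
(** Every result takes
    all section hypotheses, so that it can be instantiated uniformly at each t. *)
Section OrthogonalPolynomials.
Set Default Proof Using "All".
Variable L : (R -> R) -> R.
Variables al s rho : R.
Hypothesis L_ext : forall f g, (forall x, f x = g x) -> L f = L g.
Hypothesis L_plus : forall f g, is_poly f -> is_poly g -> L (fun x => f x + g x) = L f + L g.
Hypothesis L_scal : forall a f, is_poly f -> L (fun x => a * f x) = a * L f.
Hypothesis L_ibp : forall f, is_poly f ->
  L (fun x => f x + x * Derive f x) = L (fun x => x * f x) - al * L f - s * rho * f s.
Variable P : nat -> R -> R.
Hypothesis P_monic : forall n, exists c, forall x, P n x = x ^ n + psum c n x.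
Hypothesis P_orth : forall m n, m <> n -> L (fun x => P m x * P n x) = 0.
Hypothesis sqnorm_pos : forall n, 0 < L (fun x => P n x ^ 2).

Definition sqnorm n := L (fun x => P n x ^ 2).

Lemma L_zero : L (fun _ => 0) = 0.
Proof.
  rewrite (L_ext _ (fun x => 0 * 1)) by (intros; ring).
  rewrite (L_scal 0 (fun _ => 1)) by is_poly_tac. ring.
Qed.

Definition coef (n : nat) : nat -> R := proj1_sig (constructive_indefinite_description _ (P_monic n)).
Lemma P_coef n x : P n x = x ^ n + psum (coef n) n x.
Proof. unfold coef. destruct (constructive_indefinite_description _ (P_monic n)) as [c Hc]. apply Hc. Qed.

Lemma poly_lt_P n : poly_lt (S n) (P n).
Proof.
  apply poly_lt_ext with (fun x => x ^ n + psum (coef n) n x); [intros; rewrite P_coef; reflexivity|].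
  apply poly_lt_plus; [apply poly_lt_pow|apply poly_lt_mono with n; [lia|apply poly_lt_psum]].
Qed.

Lemma is_poly_P n : is_poly (P n).
Proof. exists (S n). apply poly_lt_P. Qed.

Lemma is_poly_Pf n : is_poly (fun x => P n x).
Proof. apply is_poly_P. Qed.

#[local] Hint Resolve is_poly_P is_poly_Pf : is_poly.

Lemma orth_psum_low k : forall n c, (k <= n)%nat -> L (fun x => P n x * psum c k x) = 0.
Proof.
  induction k as [|k IH]; intros n c Hk.
  - simpl. rewrite (L_ext _ (fun _ => 0)) by (intros; ring). apply L_zero.
  - rewrite (L_ext _ (fun x => P n x * psum (fun j => c j - c k * coef k j) k x + c k * (P n x * P k x))).
    2:{ intros x. simpl. rewrite (P_coef k x), !psum_fsum.
        replace (fsum (fun j => (c j - c k * coef k j) * x ^ j) k) with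
          (fsum (fun j => c j * x ^ j) k - c k * fsum (fun j => coef k j * x ^ j) k).
        - ring.
        - rewrite <- fsum_scal, <- fsum_minus. apply fsum_ext. intros; ring. }
    rewrite L_plus, L_scal by is_poly_tac.
    rewrite IH, P_orth by lia. ring.
Qed.

Lemma orth_poly_low k n q : (k <= n)%nat -> poly_lt k q -> L (fun x => P n x * q x) = 0.
Proof.
  intros Hk [c Hc]. rewrite (L_ext _ (fun x => P n x * psum c k x)) by (intros; rewrite Hc; reflexivity).
  apply orth_psum_low; exact Hk.
Qed.

Lemma orth_monic m g d : (forall x, g x = x ^ m + psum d m x) -> L (fun x => P m x * g x) = sqnorm m.
Proof.
  intros Hg.
  rewrite (L_ext _ (fun x => P m x ^ 2 + P m x * (g x - P m x))) by (intros; simpl; ring).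
  rewrite L_plus.
  - rewrite (orth_poly_low m m); [unfold sqnorm; ring|lia|].
    exists (fun j => d j - coef m j). intros x. rewrite Hg, (P_coef m x), !psum_fsum.
    transitivity (fsum (fun k => d k * x ^ k - coef m k * x ^ k) m);
      [rewrite fsum_minus; ring|apply fsum_ext; intros; ring].
  - is_poly_tac.
  - is_poly_tac. apply is_poly_ext with (fun x => x ^ m + psum d m x); [intros; rewrite Hg; reflexivity|]. is_poly_tac.
Qed.

Lemma orth_expansion N : forall q, poly_lt N q ->
  forall x, q x = fsum (fun k => L (fun y => q y * P k y) / sqnorm k * P k x) N.
Proof.
  induction N as [|N IH]; intros q [c Hc] x.
  - simpl. rewrite Hc. reflexivity.
  - set (q' := fun y => q y - c N * P N y).
    assert (Hq' : poly_lt N q').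
    { exists (fun j => c j - c N * coef N j). intros y. unfold q'. rewrite Hc, (P_coef N y). simpl.
      rewrite !psum_fsum.
      transitivity (fsum (fun k => c k * y ^ k - c N * (coef N k * y ^ k)) N);
        [rewrite fsum_minus, fsum_scal; ring|apply fsum_ext; intros; ring]. }
    assert (Hqq : forall y, q y = q' y + c N * P N y) by (intros; unfold q'; ring).
    assert (HqP : is_poly q) by (exists (S N); exists c; exact Hc).
    assert (Hq'P : is_poly q') by (exists N; exact Hq').
    assert (Hs : fsum (fun k => L (fun y => q y * P k y) / sqnorm k * P k x) N =
                 fsum (fun k => L (fun y => q' y * P k y) / sqnorm k * P k x) N).
    { apply fsum_ext. intros k Hk. f_equal. f_equal.
      rewrite (L_ext _ (fun y => q' y * P k y + c N * (P N y * P k y))) by (intros; rewrite Hqq; ring).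
      rewrite L_plus, L_scal, P_orth by (try lia; is_poly_tac; try assumption). ring. }
    simpl. rewrite Hs. rewrite <- IH by exact Hq'.
    rewrite (L_ext _ (fun y => P N y * q' y + c N * P N y ^ 2)) by (intros; rewrite Hqq; simpl; ring).
    rewrite L_plus, L_scal, (orth_poly_low N N q'); [|lia|exact Hq'|is_poly_tac|is_poly_tac|is_poly_tac].
    unfold sqnorm. rewrite Hqq. field. apply Rgt_not_eq, sqnorm_pos. all: try assumption.
Qed.

Lemma sqnorm_neq0 n : sqnorm n <> 0.
Proof. apply Rgt_not_eq, sqnorm_pos. Qed.

(** The coefficients of the three-term recurrence [three_term]; [rec_b] is only
    meaningful for n >= 1. *)
Definition rec_a n := L (fun x => x * P n x ^ 2) / sqnorm n.
Definition rec_b n := sqnorm n / sqnorm (n - 1).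

Lemma xP_coef n x : x * P n x = x ^ (S n) + psum (shiftc (coef n)) (S n) x.
Proof. rewrite (P_coef n x), Rmult_plus_distr_l, psum_mulx. simpl. ring. Qed.

Lemma L_xP_Psucc n : L (fun y => y * P n y * P (S n) y) = sqnorm (S n).
Proof.
  rewrite (L_ext _ (fun y => P (S n) y * (y * P n y))) by (intros; ring).
  apply orth_monic with (shiftc (coef n)). apply xP_coef.
Qed.

Lemma L_xPP n : L (fun y => y * P n y * P n y) = rec_a n * sqnorm n.
Proof.
  unfold rec_a. rewrite (L_ext _ (fun x => x * P n x ^ 2)) by (intros; simpl; ring).
  field. apply sqnorm_neq0.
Qed.

Lemma L_xPsucc_P n : L (fun y => y * P (S n) y * P n y) = sqnorm (S n).
Proof.
  rewrite (L_ext _ (fun y => P (S n) y * (y * P n y))) by (intros; ring).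
  apply orth_monic with (shiftc (coef n)). apply xP_coef.
Qed.

Lemma poly_lt_xP k : poly_lt (S (S k)) (fun y => y * P k y).
Proof. apply poly_lt_mulx. apply poly_lt_P. Qed.

Lemma L_xPP_far n k : (S (S k) <= n)%nat -> L (fun y => y * P n y * P k y) = 0.
Proof.
  intros Hk. rewrite (L_ext _ (fun y => P n y * (y * P k y))) by (intros; ring).
  apply orth_poly_low with (S (S k)); [exact Hk|apply poly_lt_xP].
Qed.

Lemma xP_expansion n x : x * P n x = fsum (fun k => L (fun y => y * P n y * P k y) / sqnorm k * P k x) (S (S n)).
Proof. apply (orth_expansion (S (S n)) (fun y => y * P n y)). apply poly_lt_xP. Qed.

Lemma three_term_0 x : x * P 0 x = P 1 x + rec_a 0 * P 0 x.
Proof.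
  rewrite xP_expansion. simpl. rewrite L_xP_Psucc, L_xPP.
  field. split; apply sqnorm_neq0.
Qed.

Lemma three_term n x : x * P (S n) x = P (S (S n)) x + rec_a (S n) * P (S n) x + rec_b (S n) * P n x.
Proof.
  rewrite xP_expansion. simpl fsum.
  rewrite (fsum_ext _ (fun _ => 0)).
  - rewrite fsum_zero. rewrite L_xP_Psucc, L_xPP, L_xPsucc_P. unfold rec_b. simpl. rewrite Nat.sub_0_r.
    field. repeat split; apply sqnorm_neq0.
  - intros k Hk. rewrite L_xPP_far by lia. unfold Rdiv. ring.
Qed.

Definition coef_full m j := if (j <? m)%nat then coef m j else 1.

Lemma P_coef_full m x : P m x = psum (coef_full m) (S m) x.
Proof.
  rewrite psum_top. unfold coef_full at 2. rewrite Nat.ltb_irrefl.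
  rewrite (P_coef m x). rewrite (psum_ext (coef_full m) (coef m)). ring.
  intros k Hk. unfold coef_full. apply Nat.ltb_lt in Hk. rewrite Hk. reflexivity.
Qed.

Definition xDP m := fun x => x * Derive (P m) x.

Lemma xDP_decomp m x : xDP m x = INR m * P m x + psum (fun j => (INR j - INR m) * coef m j) m x.
Proof.
  unfold xDP. rewrite (x_Derive_psum (coef_full m) (S m) (P m) (P_coef_full m) x).
  rewrite psum_top. unfold coef_full at 2. rewrite Nat.ltb_irrefl.
  rewrite (psum_ext (fun k => INR k * coef_full m k) (fun k => INR k * coef m k)).
  2:{ intros k Hk. unfold coef_full. apply Nat.ltb_lt in Hk. rewrite Hk. reflexivity. }
  rewrite (P_coef m x), !psum_fsum.
  replace (fsum (fun k => (INR k - INR m) * coef m k * x ^ k) m) with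
    (fsum (fun k => INR k * coef m k * x ^ k) m - INR m * fsum (fun k => coef m k * x ^ k) m).
  - ring.
  - rewrite <- fsum_scal, <- fsum_minus. apply fsum_ext; intros; ring.
Qed.

Lemma poly_lt_xDP m : poly_lt (S m) (xDP m).
Proof.
  apply poly_lt_ext with (fun x => INR m * P m x + psum (fun j => (INR j - INR m) * coef m j) m x).
  { intros; rewrite xDP_decomp; reflexivity. }
  apply poly_lt_plus; [apply poly_lt_scal, poly_lt_P|apply poly_lt_mono with m; [lia|apply poly_lt_psum]].
Qed.

Lemma is_poly_xDP m : is_poly (xDP m).
Proof. exists (S m); apply poly_lt_xDP. Qed.

Lemma is_poly_xDPf m : is_poly (fun x => xDP m x).
Proof. apply is_poly_xDP. Qed.

#[local] Hint Resolve is_poly_xDPf : is_poly.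

Lemma by_parts_PP m k :
  L (fun x => P m x * P k x) + L (fun x => xDP m x * P k x) + L (fun x => P m x * xDP k x)
  = L (fun x => x * P m x * P k x) - al * L (fun x => P m x * P k x) - s * rho * P m s * P k s.
Proof.
  pose proof (L_ibp (fun x => P m x * P k x) ltac:(is_poly_tac)) as H. cbv beta in H.
  rewrite (L_ext (fun x => P m x * P k x + x * Derive (fun x0 => P m x0 * P k x0) x)
                 (fun x => (P m x * P k x + xDP m x * P k x) + P m x * xDP k x)) in H.
  2:{ intros x. rewrite Derive_mult by (apply ex_derive_is_poly; apply is_poly_P). unfold xDP. ring. }
  rewrite !L_plus in H by is_poly_tac.
  rewrite (L_ext (fun x => x * (P m x * P k x)) (fun x => x * P m x * P k x)) in H by (intros; ring).
  rewrite H by is_poly_tac. ring.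
Qed.

Lemma orth_xDP_low m k : (S k <= m)%nat -> L (fun x => P m x * xDP k x) = 0.
Proof. intros Hk. apply orth_poly_low with (S k); [exact Hk|apply poly_lt_xDP]. Qed.

Lemma L_xDP_diag m : L (fun x => xDP m x * P m x) = INR m * sqnorm m.
Proof.
  rewrite (L_ext _ (fun x => INR m * P m x ^ 2 + P m x * psum (fun j => (INR j - INR m) * coef m j) m x)).
  2:{ intros x. rewrite xDP_decomp. simpl. ring. }
  rewrite L_plus, L_scal by is_poly_tac. rewrite (orth_psum_low m m) by lia. unfold sqnorm; ring.
Qed.

Definition Rseq n := rho * P n s ^ 2 / sqnorm n.
Definition rseq n := rho * P n s * P (n - 1) s / sqnorm (n - 1).

Lemma rec_a_formula n : rec_a n = 2 * INR n + 1 + al + s * Rseq n.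
Proof.
  pose proof (by_parts_PP n n) as H.
  rewrite (L_ext (fun x => P n x * xDP n x) (fun x => xDP n x * P n x)) in H by (intros; ring).
  rewrite L_xDP_diag in H. rewrite L_xPP in H.
  rewrite (L_ext (fun x => P n x * P n x) (fun x => P n x ^ 2)) in H by (intros; simpl; ring).
  fold (sqnorm n) in H. unfold Rseq.
  pose proof (sqnorm_neq0 n).
  apply Rmult_eq_reg_r with (sqnorm n); [|exact H0].
  replace ((2 * INR n + 1 + al + s * (rho * P n s ^ 2 / sqnorm n)) * sqnorm n) with
    (sqnorm n + INR n * sqnorm n + INR n * sqnorm n + al * sqnorm n + s * rho * P n s * P n s) by (simpl; field; exact H0).
  lra.
Qed.

Lemma L_xDP_prev n : L (fun x => xDP (S n) x * P n x) = sqnorm (S n) - s * rho * P (S n) s * P n s.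
Proof.
  pose proof (by_parts_PP (S n) n) as H.
  rewrite P_orth in H by lia. rewrite orth_xDP_low in H by lia. rewrite L_xPsucc_P in H. lra.
Qed.

Lemma L_xDP_far n k : (S k < n)%nat -> L (fun x => xDP n x * P k x) = - (s * rho * P n s * P k s).
Proof.
  intros Hk. pose proof (by_parts_PP n k) as H.
  rewrite P_orth in H by lia. rewrite orth_xDP_low in H by lia. rewrite L_xPP_far in H by lia. lra.
Qed.

Definition cd_kernel n x y := fsum (fun k => P k x * P k y / sqnorm k) n.

Lemma P0_eq x : P 0 x = 1.
Proof. rewrite P_coef. simpl. ring. Qed.

Lemma P1_eq x : P 1 x = x - rec_a 0.
Proof. pose proof (three_term_0 x) as H. rewrite P0_eq in H. lra. Qed.

Lemma christoffel_darboux n x y : (x - y) * cd_kernel (S n) x y = (P (S n) x * P n y - P n x * P (S n) y) / sqnorm n.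
Proof.
  induction n as [|n IH].
  - unfold cd_kernel. simpl. rewrite !P0_eq, !P1_eq. field. apply sqnorm_neq0.
  - unfold cd_kernel in *. simpl fsum in *. rewrite Rmult_plus_distr_l.
    simpl fsum in IH. rewrite IH.
    replace ((x - y) * (P (S n) x * P (S n) y / sqnorm (S n))) with
      ((x * P (S n) x) * P (S n) y / sqnorm (S n) - P (S n) x * (y * P (S n) y) / sqnorm (S n))
      by (field; apply sqnorm_neq0).
    rewrite (three_term n x), (three_term n y). unfold rec_b. simpl. rewrite Nat.sub_0_r.
    field. split; apply sqnorm_neq0.
Qed.

Lemma xDP_0 m : xDP m 0 = 0.
Proof. unfold xDP. ring. Qed.

Lemma xDP_expansion_0 m : 0 = INR (S m) * P (S m) 0 + rec_b (S m) * P m 0 - s * rho * P (S m) s * cd_kernel (S m) 0 s.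
Proof.
  rewrite <- (xDP_0 (S m)) at 1.
  rewrite (orth_expansion (S (S m)) (xDP (S m)) (poly_lt_xDP (S m)) 0).
  simpl fsum. unfold cd_kernel. simpl fsum.
  rewrite L_xDP_diag, L_xDP_prev.
  rewrite (fsum_ext _ (fun k => - (s * rho * P (S m) s) * (P k 0 * P k s / sqnorm k))).
  2:{ intros k Hk. rewrite L_xDP_far by lia. field. apply sqnorm_neq0. }
  rewrite fsum_scal. unfold rec_b. simpl. rewrite Nat.sub_0_r.
  field. split; apply sqnorm_neq0.
Qed.

Lemma ladder_0_up m : (INR (S m) + rseq (S m)) * P (S m) 0 = rec_b (S m) * (Rseq (S m) - 1) * P m 0.
Proof.
  pose proof (xDP_expansion_0 m) as E. pose proof (christoffel_darboux m 0 s) as C.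
  assert (HK : s * cd_kernel (S m) 0 s = - ((P (S m) 0 * P m s - P m 0 * P (S m) s) / sqnorm m)) by lra.
  replace (s * rho * P (S m) s * cd_kernel (S m) 0 s) with (rho * P (S m) s * (s * cd_kernel (S m) 0 s)) in E by ring.
  rewrite HK in E. unfold rseq, Rseq, rec_b in *. simpl in *. rewrite Nat.sub_0_r in *.
  pose proof (sqnorm_neq0 m). pose proof (sqnorm_neq0 (S m)).
  apply Rminus_diag_uniq. match type of E with 0 = ?r => transitivity r; [field; split; assumption|symmetry; exact E] end.
Qed.

Definition subcoef n := match n with O => 0 | S m => coef (S m) m end.

Lemma L_P_pow n : L (fun x => P n x * x ^ n) = sqnorm n.
Proof. apply orth_monic with (fun _ => 0). intros x. rewrite psum_0. ring. Qed.

Lemma P_succ_split n x : P (S n) x = x ^ (S n) + psum (coef (S n)) n x + subcoef (S n) * x ^ n.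
Proof. rewrite P_coef, psum_top. simpl subcoef. ring. Qed.

Lemma L_P_pow_succ n : L (fun x => P n x * x ^ (S n)) = - subcoef (S n) * sqnorm n.
Proof.
  rewrite (L_ext _ (fun x => P n x * P (S n) x + (- subcoef (S n)) * (P n x * x ^ n) + (-1) * (P n x * psum (coef (S n)) n x))).
  2:{ intros x. rewrite (P_succ_split n x). ring. }
  rewrite !L_plus, !L_scal by is_poly_tac.
  rewrite P_orth by lia. rewrite L_P_pow. rewrite orth_psum_low by lia. ring.
Qed.

Lemma rec_a_subcoef n : rec_a n = subcoef n - subcoef (S n).
Proof.
  pose proof (sqnorm_neq0 n) as Hn.
  assert (rec_a n * sqnorm n = (subcoef n - subcoef (S n)) * sqnorm n).
  { rewrite <- L_xPP.
    destruct n as [|m].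
    - rewrite (L_ext _ (fun x => P 0 x * x ^ 1)) by (intros; rewrite P0_eq; simpl; ring).
      rewrite L_P_pow_succ. simpl subcoef. ring.
    - rewrite (L_ext _ (fun x => P (S m) x * x ^ (S (S m)) + subcoef (S m) * (P (S m) x * x ^ (S m))
                               + P (S m) x * (x * psum (coef (S m)) m x))).
      2:{ intros x. rewrite (P_succ_split m x). simpl. ring. }
      rewrite !L_plus, !L_scal by is_poly_tac.
      rewrite L_P_pow_succ, L_P_pow.
      rewrite (orth_poly_low (S m) (S m) (fun x => x * psum (coef (S m)) m x)); [ring|lia|].
      apply poly_lt_mulx, poly_lt_psum. }
  apply Rmult_eq_reg_r with (sqnorm n); assumption.
Qed.

Lemma L_xDP_prev_subcoef m : L (fun x => xDP (S m) x * P m x) = - subcoef (S m) * sqnorm m.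
Proof.
  rewrite (L_ext _ (fun x => INR (S m) * (P (S m) x * P m x) + P m x * psum (fun j => (INR j - INR (S m)) * coef (S m) j) m x
                             + (INR m - INR (S m)) * subcoef (S m) * (P m x * x ^ m))).
  2:{ intros x. rewrite xDP_decomp, psum_top. simpl subcoef. ring. }
  rewrite !L_plus, !L_scal by is_poly_tac.
  rewrite P_orth by lia. rewrite orth_psum_low by lia. rewrite L_P_pow. rewrite S_INR. ring.
Qed.

Lemma subcoef_sum n : subcoef n = - fsum rec_a n.
Proof.
  induction n as [|n IH]; [simpl; ring|]. simpl fsum. rewrite rec_a_subcoef.
  rewrite IH. ring.
Qed.

Lemma rec_b_formula m : rec_b (S m) = s * rseq (S m) + fsum rec_a (S m).
Proof.
  pose proof (L_xDP_prev m) as H. rewrite L_xDP_prev_subcoef in H.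
  rewrite <- (Ropp_involutive (fsum rec_a (S m))), <- subcoef_sum.
  unfold rec_b, rseq. simpl. rewrite Nat.sub_0_r.
  pose proof (sqnorm_neq0 m).
  replace (sqnorm (S m)) with (- subcoef (S m) * sqnorm m + s * rho * P (S m) s * P m s) by lra.
  simpl subcoef. field. assumption.
Qed.

Lemma ladder_0_down m : (INR (S m) + rseq (S m) + al) * P m 0 = (Rseq m - 1) * P (S m) 0.
Proof.
  destruct m as [|p].
  - rewrite P0_eq, !P1_eq. pose proof (rec_a_formula 0) as Ha.
    unfold rseq, Rseq in *. simpl in *. rewrite P0_eq, P1_eq in *.
    pose proof (sqnorm_neq0 0). rewrite Ha. field. assumption.
  - pose proof (ladder_0_up p) as E1. pose proof (three_term p 0) as E2. pose proof (three_term p s) as E3.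
    pose proof (rec_a_formula (S p)) as E4.
    assert (E3' : s * Rseq (S p) = rseq (S (S p)) + rec_a (S p) * Rseq (S p) + rseq (S p)).
    { unfold Rseq, rseq. replace (S (S p) - 1)%nat with (S p) by lia. replace (S p - 1)%nat with p by lia.
      pose proof (sqnorm_neq0 p). pose proof (sqnorm_neq0 (S p)).
      transitivity ((s * P (S p) s) * (rho * P (S p) s / sqnorm (S p))); [field; assumption|].
      rewrite E3. unfold rec_b. replace (S p - 1)%nat with p by lia. field. split; assumption. }
    rewrite Rmult_0_l in E2.
    assert (Ebc : rec_b (S p) * P p 0 = - P (S (S p)) 0 - rec_a (S p) * P (S p) 0) by lra.
    replace (rec_b (S p) * (Rseq (S p) - 1) * P p 0) with ((Rseq (S p) - 1) * (rec_b (S p) * P p 0)) in E1 by ring.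
    rewrite Ebc in E1.
    assert (Err : rseq (S (S p)) = s * Rseq (S p) - rec_a (S p) * Rseq (S p) - rseq (S p)) by lra.
    rewrite Err. rewrite E4 in *. rewrite !S_INR in *. lra.
Qed.

Lemma rec_b_neq0 m : rec_b (S m) <> 0.
Proof. unfold rec_b. simpl. rewrite Nat.sub_0_r. pose proof (sqnorm_pos m). pose proof (sqnorm_pos (S m)).
  apply Rgt_not_eq. unfold sqnorm. apply Rdiv_lt_0_compat; assumption. Qed.

Lemma P_0_nonvanishing n : P n 0 <> 0 \/ P (S n) 0 <> 0.
Proof.
  induction n as [|n IH].
  - left. rewrite P0_eq. lra.
  - destruct (Req_dec (P (S n) 0) 0) as [Ha|Ha]; [|left; exact Ha].
    right. intros Hb. pose proof (three_term n 0) as E. rewrite Ha, Hb in E.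
    assert (rec_b (S n) * P n 0 = 0) by lra.
    apply Rmult_integral in H. destruct H as [H|H]; [apply (rec_b_neq0 n H)|].
    destruct IH as [IH|IH]; contradiction.
Qed.

Lemma ladder_product m : (INR (S m) + rseq (S m)) * (INR (S m) + rseq (S m) + al) = rec_b (S m) * (1 - Rseq (S m)) * (1 - Rseq m).
Proof.
  pose proof (ladder_0_up m) as E1. pose proof (ladder_0_down m) as E2.
  destruct (Req_dec (P (S m) 0) 0) as [Ha|Ha].
  - destruct (P_0_nonvanishing m) as [Hb|Hb]; [|contradiction].
    rewrite Ha in E1, E2. rewrite Rmult_0_r in E1, E2.
    assert (HR : Rseq (S m) - 1 = 0).
    { symmetry in E1. apply Rmult_integral in E1. destruct E1 as [E|E]; [|contradiction].
      apply Rmult_integral in E. destruct E as [E|E]; [exfalso; apply (rec_b_neq0 m E)|exact E]. }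
    assert (HN : INR (S m) + rseq (S m) + al = 0).
    { apply Rmult_integral in E2. destruct E2 as [E|E]; [exact E|contradiction]. }
    rewrite HN. replace (1 - Rseq (S m)) with 0 by lra. ring.
  - apply Rmult_eq_reg_r with (P (S m) 0); [|exact Ha].
    replace ((INR (S m) + rseq (S m)) * (INR (S m) + rseq (S m) + al) * P (S m) 0) with
      ((INR (S m) + rseq (S m) + al) * ((INR (S m) + rseq (S m)) * P (S m) 0)) by ring.
    rewrite E1.
    replace ((INR (S m) + rseq (S m) + al) * (rec_b (S m) * (Rseq (S m) - 1) * P m 0)) with
      (rec_b (S m) * (Rseq (S m) - 1) * ((INR (S m) + rseq (S m) + al) * P m 0)) by ring.
    rewrite E2. ring.
Qed.

Lemma rseq_sq m : rseq (S m) ^ 2 = rec_b (S m) * Rseq (S m) * Rseq m.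
Proof.
  unfold rseq, rec_b, Rseq. simpl. rewrite Nat.sub_0_r. pose proof (sqnorm_neq0 m). pose proof (sqnorm_neq0 (S m)).
  field. split; assumption.
Qed.

Lemma rec_b_Rseq m : INR (S m) * (INR (S m) + al) + (2 * INR (S m) + al) * rseq (S m)
             = rec_b (S m) * (1 - Rseq (S m) - Rseq m).
Proof.
  pose proof (ladder_product m) as K1. pose proof (rseq_sq m) as K2.
  simpl in K2.
  replace (rec_b (S m) * (1 - Rseq (S m) - Rseq m)) with
    (rec_b (S m) * (1 - Rseq (S m)) * (1 - Rseq m) - rec_b (S m) * Rseq (S m) * Rseq m) by ring.
  rewrite <- K1, <- K2. ring.
Qed.

Lemma rec_a_sum N : fsum rec_a N = INR N * (INR N + al) + s * fsum Rseq N.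
Proof.
  induction N as [|N IH]; simpl fsum; [simpl; ring|].
  rewrite IH, rec_a_formula, S_INR. ring.
Qed.

End OrthogonalPolynomials.
Unset Default Proof Using.

Section Instance.
Variables al A B : R.
Hypothesis Hal : 0 < al.
Hypothesis HA : 0 <= A.
Hypothesis HB : 0 < B.
Variable P : nat -> R -> R -> R.
Hypothesis HP : monic_OPS al A B P.

Lemma wint_by_parts_poly u : 0 < u -> forall f, is_poly f ->
  wint al A B u (fun x => f x + x * Derive f x)
  = wint al A B u (fun x => x * f x) - al * wint al A B u f - u * jump al B u * f u.
Proof. intros Hu f [N [c Hc]]. apply (wint_by_parts al A B u Hal Hu f c N Hc). Qed.

Lemma monic_OPS_monic u : 0 < u -> forall n, exists c, forall x, P n x u = x ^ n + psum c n x.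
Proof. intros Hu n. destruct (HP u Hu) as [H1 _]. apply H1. Qed.

Lemma monic_OPS_orth u : 0 < u -> forall m n, m <> n ->
  wint al A B u (fun x => P m x u * P n x u) = 0.
Proof.
  intros Hu m n Hmn. destruct (HP u Hu) as [_ H2].
  unfold wint, int0inf. apply is_RInt_gen_unique, H2, Hmn.
Qed.

Lemma monic_OPS_sqnorm_pos u : 0 < u -> forall n, 0 < wint al A B u (fun x => P n x u ^ 2).
Proof.
  intros Hu n. destruct (monic_OPS_monic u Hu n) as [c Hc].
  rewrite (wint_ext _ _ _ _ _ (fun x => (x ^ n + psum c n x) ^ 2)) by (intros; rewrite Hc; reflexivity).
  apply wint_monic_sq_pos; assumption.
Qed.

End Instance.

(** Instantiates a result of [OrthogonalPolynomials] with the polynomials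
    [P _ _ u] and the functional [wint al A B u], at a time [u > 0]. *)
Ltac ops_at lem al A B P Hal HA HB HP u Hu H :=
  pose proof (lem (wint al A B u) al u (jump al B u) (wint_ext al A B u)
    (wint_plus al A B u Hal Hu) (wint_scal al A B u Hal Hu) (wint_by_parts_poly al A B Hal u Hu)
    (fun n x => P n x u) (monic_OPS_monic al A B P HP u Hu) (monic_OPS_orth al A B P HP u Hu)
    (monic_OPS_sqnorm_pos al A B Hal HA HB P HP u Hu)) as H; cbv beta in H.

Lemma wint_pow al A B u k : 0 < al -> 0 < u -> wint al A B u (fun x => x ^ k) = moment al A B k u.
Proof. intros Hal Hu. unfold wint, int0inf. apply is_RInt_gen_unique, moment_correct; assumption. Qed.

Lemma wint_psum_mult al A B u c N d M : 0 < al -> 0 < u ->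
  wint al A B u (fun x => psum c N x * psum d M x) =
  fsum (fun k => fsum (fun l => c k * d l * moment al A B (k + l) u) M) N.
Proof.
  intros Hal Hu.
  assert (Hpm : forall k, wint al A B u (fun x => x ^ k * psum d M x)
                          = fsum (fun l => d l * moment al A B (k + l) u) M).
  { intros k. induction M as [|M IH]; simpl.
    - rewrite (wint_ext _ _ _ _ _ (fun _ => 0)) by (intros; ring). apply wint_zero; assumption.
    - rewrite (wint_ext _ _ _ _ _ (fun x => x ^ k * psum d M x + d M * x ^ (k + M)))
        by (intros x; rewrite pow_add; ring).
      rewrite wint_plus, wint_scal by (try assumption; is_poly_tac).
      rewrite IH, wint_pow by assumption. ring. }
  induction N as [|N IH]; simpl.
  - rewrite (wint_ext _ _ _ _ _ (fun _ => 0)) by (intros; ring). apply wint_zero; assumption.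
  - rewrite (wint_ext _ _ _ _ _ (fun x => psum c N x * psum d M x + c N * (x ^ N * psum d M x)))
      by (intros x; ring).
    rewrite wint_plus, wint_scal by (try assumption; is_poly_tac).
    rewrite IH, Hpm, <- fsum_scal. f_equal. apply fsum_ext. intros; ring.
Qed.

Lemma is_derive_fsum (g g' : nat -> R -> R) N u :
  (forall k, is_derive (g k) u (g' k u)) ->
  is_derive (fun v => fsum (fun k => g k v) N) u (fsum (fun k => g' k u) N).
Proof.
  intros H. induction N as [|N IH]; simpl.
  - apply is_derive_Reals, derivable_pt_lim_const.
  - apply is_derive_Reals, derivable_pt_lim_plus; apply is_derive_Reals; [exact IH|apply H].
Qed.

Lemma is_derive_mult3 (f g k : R -> R) u df dg dk :
  is_derive f u df -> is_derive g u dg -> is_derive k u dk ->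
  is_derive (fun v => f v * g v * k v) u (df * g u * k u + f u * dg * k u + f u * g u * dk).
Proof.
  intros Hf Hg Hk. apply is_derive_Reals.
  replace (df * g u * k u + f u * dg * k u + f u * g u * dk) with
    ((df * g u + f u * dg) * k u + (f u * g u) * dk) by ring.
  apply (derivable_pt_lim_mult (fun v => f v * g v) k).
  - apply derivable_pt_lim_mult; apply is_derive_Reals; assumption.
  - apply is_derive_Reals; assumption.
Qed.

Lemma fsum_prod (a b : nat -> R) N M :
  fsum (fun k => fsum (fun l => a k * b l) M) N = fsum a N * fsum b M.
Proof. induction N as [|N IH]; simpl; [ring|]. rewrite IH, fsum_scal. ring. Qed.

Lemma is_derive_eq (f : R -> R) (x l l' : R) : is_derive f x l -> l = l' -> is_derive f x l'.
Proof. intros H <-. exact H. Qed.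

Lemma locally_pos_ext (f g : R -> R) u : 0 < u ->
  (forall v, 0 < v -> f v = g v) -> locally u (fun v => f v = g v).
Proof. intros Hu H. apply (filter_imp (fun v => 0 < v)); [exact H|exact (open_gt 0 u Hu)]. Qed.

(** Besides the derivatives of the coefficients, the moving jump of the weight
    contributes [- jump]. *)
Lemma is_derive_wint_psum_mult al A B (C D : nat -> R -> R) (C' D' : nat -> R) N M u :
  0 < al -> 0 < u ->
  (forall k, is_derive (C k) u (C' k)) -> (forall k, is_derive (D k) u (D' k)) ->
  is_derive (fun v => wint al A B v (fun x => psum (fun k => C k v) N x * psum (fun l => D l v) M x)) u
    (wint al A B u (fun x => psum C' N x * psum (fun l => D l u) M x)
     + wint al A B u (fun x => psum (fun k => C k u) N x * psum D' M x)
     - jump al B u * psum (fun k => C k u) N u * psum (fun l => D l u) M u).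
Proof.
  intros Hal Hu HC HD.
  set (dm := fun n v => - (B * v ^ n * xpow v al * exp (- v))).
  apply is_derive_ext_loc with
    (fun v => fsum (fun k => fsum (fun l => C k v * D l v * moment al A B (k + l) v) M) N).
  { apply locally_pos_ext; [exact Hu|]. intros v Hv. symmetry. apply wint_psum_mult; assumption. }
  eapply is_derive_eq.
  - apply (is_derive_fsum _ (fun k v => fsum (fun l => C' k * D l v * moment al A B (k + l) v
             + C k v * D' l * moment al A B (k + l) v + C k v * D l v * dm (k + l)%nat v) M) N u).
    intros k. apply (is_derive_fsum (fun l v => C k v * D l v * moment al A B (k + l) v)
      (fun l v => C' k * D l v * moment al A B (k + l) v
         + C k v * D' l * moment al A B (k + l) v + C k v * D l v * dm (k + l)%nat v) M u).
    intros l. apply is_derive_mult3; [apply HC|apply HD|apply moment_derive; assumption].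
  - unfold dm. rewrite !wint_psum_mult, !psum_fsum by assumption. unfold jump.
    rewrite Rmult_assoc, <- fsum_prod, <- !fsum_scal, <- fsum_plus, <- fsum_minus.
    apply fsum_ext. intros k _.
    rewrite <- !fsum_scal, <- fsum_plus, <- fsum_minus. apply fsum_ext. intros l _.
    rewrite pow_add. ring.
Qed.

Lemma ex_derive_Rconst (a x : R) : ex_derive (fun _ : R => a) x.
Proof. exists 0. apply is_derive_Reals, derivable_pt_lim_const. Qed.

Lemma ex_derive_Rminus (f g : R -> R) x :
  ex_derive f x -> ex_derive g x -> ex_derive (fun y => f y - g y) x.
Proof.
  intros [l1 H1] [l2 H2]. exists (l1 - l2).
  apply is_derive_Reals, derivable_pt_lim_minus; apply is_derive_Reals; assumption.
Qed.

Lemma ex_derive_ext_pos (f g : R -> R) u : 0 < u ->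
  (forall v, 0 < v -> f v = g v) -> ex_derive f u -> ex_derive g u.
Proof.
  intros Hu H [l Hl]. exists l. apply is_derive_ext_loc with f; [|exact Hl].
  apply locally_pos_ext; assumption.
Qed.

Section SmoothCoefficients.
Variables al A B : R.
Hypothesis Hal : 0 < al.
Hypothesis HA : 0 <= A.
Hypothesis HB : 0 < B.
Variable P : nat -> R -> R -> R.
Hypothesis HP : monic_OPS al A B P.

Local Ltac ops lem u Hu H := ops_at lem al A B P Hal HA HB HP u Hu H.
Local Notation hn := (hn al A B P).

Definition smooth_coefs j := exists c : nat -> R -> R,
  (forall k u, 0 < u -> ex_derive (c k) u) /\
  (forall u x, 0 < u -> P j x u = x ^ j + psum (fun k => c k u) j x).

Definition coefs_monic (c : nat -> R -> R) j k u := if (k <? j)%nat then c k u else 1.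

Lemma psum_coefs_monic c j u x :
  x ^ j + psum (fun k => c k u) j x = psum (fun k => coefs_monic c j k u) (S j) x.
Proof.
  rewrite psum_top. unfold coefs_monic at 2. rewrite Nat.ltb_irrefl.
  rewrite (psum_ext (fun k => c k u) (fun k => coefs_monic c j k u)); [ring|].
  intros k Hk. unfold coefs_monic. apply Nat.ltb_lt in Hk. rewrite Hk. reflexivity.
Qed.

Lemma ex_derive_coefs_monic c j k u : (forall k u, 0 < u -> ex_derive (c k) u) -> 0 < u ->
  ex_derive (coefs_monic c j k) u.
Proof.
  intros Hc Hu. unfold coefs_monic. destruct (k <? j)%nat; [apply Hc, Hu|apply ex_derive_Rconst].
Qed.

Definition coefs_shift (c : nat -> R -> R) k v := shiftc (fun i => c i v) k.

(** The recurrence coefficients a_j and b_{j+1} as functions of t. *)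
Definition rec_a_t j u := wint al A B u (fun x => x * P j x u ^ 2) / hn j u.
Definition rec_b_t j u := hn (S j) u / hn j u.

Lemma hn_wint j u : hn j u = wint al A B u (fun x => P j x u ^ 2).
Proof. reflexivity. Qed.

Lemma hn_pos j u : 0 < u -> 0 < hn j u.
Proof. intros Hu. apply (monic_OPS_sqnorm_pos al A B Hal HA HB P HP u Hu j). Qed.

Lemma hn_psum c j u : 0 < u -> (forall x, P j x u = x ^ j + psum (fun k => c k u) j x) ->
  hn j u = wint al A B u (fun x =>
    psum (fun k => coefs_monic c j k u) (S j) x * psum (fun k => coefs_monic c j k u) (S j) x).
Proof.
  intros Hu Hc. rewrite hn_wint. apply wint_ext. intros x. rewrite Hc, psum_coefs_monic. simpl. ring.
Qed.

Lemma ex_derive_hn j u : smooth_coefs j -> 0 < u -> ex_derive (hn j) u.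
Proof.
  intros [c [Hd Hc]] Hu.
  apply ex_derive_ext_pos with (fun v => wint al A B v (fun x =>
    psum (fun k => coefs_monic c j k v) (S j) x * psum (fun k => coefs_monic c j k v) (S j) x));
    [exact Hu| |].
  - intros v Hv. symmetry. apply hn_psum; [exact Hv|]. intros x. apply Hc, Hv.
  - eexists. apply is_derive_wint_psum_mult; try assumption;
      intros k; apply Derive_correct, ex_derive_coefs_monic; assumption.
Qed.

(** Only the moving jump contributes: the t-derivatives of the coefficients
    form a polynomial of degree < j, orthogonal to P_j. *)
Lemma is_derive_hn j u : smooth_coefs j -> 0 < u -> is_derive (hn j) u (- jump al B u * P j u u ^ 2).
Proof.
  intros [c [Hd Hc]] Hu.
  set (C := coefs_monic c j). set (C' := fun k => Derive (C k) u).
  assert (HC : forall k, is_derive (C k) u (C' k))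
    by (intros k; apply Derive_correct, ex_derive_coefs_monic; assumption).
  assert (Hrep : forall x, psum (fun k => C k u) (S j) x = P j x u)
    by (intros x; rewrite Hc by exact Hu; unfold C; rewrite psum_coefs_monic; reflexivity).
  assert (HCj : C' j = 0).
  { unfold C', C, coefs_monic.
    rewrite (Derive_ext _ (fun _ => 1)) by (intros; rewrite Nat.ltb_irrefl; reflexivity).
    apply Derive_const. }
  assert (HC'deg : poly_lt j (psum C' (S j))) by (exists C'; intros x; rewrite psum_top, HCj; ring).
  assert (Horth : wint al A B u (fun x => P j x u * psum C' (S j) x) = 0).
  { ops orth_poly_low u Hu H. apply (H j j _ (le_n j) HC'deg). }
  apply is_derive_ext_loc with (fun v => wint al A B v (fun x =>
    psum (fun k => C k v) (S j) x * psum (fun k => C k v) (S j) x)).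
  { apply locally_pos_ext; [exact Hu|]. intros v Hv. symmetry.
    apply hn_psum; [exact Hv|]. intros x. apply Hc, Hv. }
  eapply is_derive_eq; [apply (is_derive_wint_psum_mult al A B C C C' C'); assumption|].
  rewrite (wint_ext _ _ _ _ (fun x => psum C' (S j) x * psum (fun k => C k u) (S j) x)
            (fun x => P j x u * psum C' (S j) x)) by (intros; rewrite Hrep; ring).
  rewrite (wint_ext _ _ _ _ (fun x => psum (fun k => C k u) (S j) x * psum C' (S j) x)
            (fun x => P j x u * psum C' (S j) x)) by (intros; rewrite Hrep; ring).
  rewrite !Hrep, Horth. ring.
Qed.

Lemma ex_derive_rec_a_t j u : smooth_coefs j -> 0 < u -> ex_derive (rec_a_t j) u.
Proof.
  intros HS Hu. unfold rec_a_t. apply ex_derive_div.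
  - destruct HS as [c [Hd Hc]].
    apply ex_derive_ext_pos with (fun v => wint al A B v (fun x =>
      psum (fun k => coefs_shift (coefs_monic c j) k v) (S (S j)) x
      * psum (fun k => coefs_monic c j k v) (S j) x)); [exact Hu| |].
    + intros v Hv. apply wint_ext. intros x.
      rewrite Hc, psum_coefs_monic by exact Hv. unfold coefs_shift. rewrite <- psum_mulx. simpl. ring.
    + eexists. apply is_derive_wint_psum_mult; try assumption; intros k; apply Derive_correct.
      * destruct k; simpl; [apply ex_derive_Rconst|apply ex_derive_coefs_monic; assumption].
      * apply ex_derive_coefs_monic; assumption.
  - apply ex_derive_hn; assumption.
  - apply Rgt_not_eq, hn_pos, Hu.
Qed.

Lemma smooth_coefs_0 : smooth_coefs 0.
Proof.
  exists (fun _ _ => 0). split; [intros; apply ex_derive_Rconst|].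
  intros u x Hu. ops P0_eq u Hu H. rewrite H. simpl. ring.
Qed.

Lemma smooth_coefs_1 : smooth_coefs 1.
Proof.
  exists (fun _ v => -1 * rec_a_t 0 v). split.
  - intros k u Hu. apply ex_derive_mult; [apply ex_derive_Rconst|apply ex_derive_rec_a_t, Hu].
    apply smooth_coefs_0.
  - intros u x Hu. ops P1_eq u Hu H. rewrite H.
    simpl. unfold rec_a_t, rec_a, sqnorm. rewrite hn_wint. ring.
Qed.

Definition coefs_pad (c : nat -> R -> R) n k v :=
  if (k <? n)%nat then c k v else if (k =? n)%nat then 1 else 0.

Lemma psum_coefs_pad c n v x :
  x ^ n + psum (fun k => c k v) n x = psum (fun k => coefs_pad c n k v) (S (S n)) x.
Proof.
  rewrite (psum_top _ (S n)), psum_top. unfold coefs_pad at 2 3.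
  rewrite Nat.ltb_irrefl, Nat.eqb_refl.
  replace ((S n <? n)%nat) with false by (symmetry; apply Nat.ltb_ge; lia).
  replace ((S n =? n)%nat) with false by (symmetry; apply Nat.eqb_neq; lia).
  rewrite (psum_ext (fun k => c k v) (fun k => coefs_pad c n k v)); [ring|].
  intros k Hk. unfold coefs_pad. apply Nat.ltb_lt in Hk. rewrite Hk. reflexivity.
Qed.

Lemma ex_derive_coefs_pad c n k u : (forall k u, 0 < u -> ex_derive (c k) u) -> 0 < u ->
  ex_derive (coefs_pad c n k) u.
Proof.
  intros Hc Hu. unfold coefs_pad. destruct (k <? n)%nat; [apply Hc, Hu|].
  destruct (k =? n)%nat; apply ex_derive_Rconst.
Qed.

Lemma three_term_t n x u : 0 < u ->
  P (S (S n)) x u = x * P (S n) x u - rec_a_t (S n) u * P (S n) x u - rec_b_t n u * P n x u.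
Proof.
  intros Hu. ops three_term u Hu H. rewrite H.
  unfold rec_b, rec_a, sqnorm, rec_b_t, rec_a_t. rewrite !hn_wint.
  replace (S n - 1)%nat with n by lia. ring.
Qed.

Lemma smooth_coefs_SS n : smooth_coefs n -> smooth_coefs (S n) -> smooth_coefs (S (S n)).
Proof.
  intros [c0 [Hd0 Hc0]] [c1 [Hd1 Hc1]].
  exists (fun k v => coefs_shift c1 k v - rec_a_t (S n) v * coefs_monic c1 (S n) k v
                     - rec_b_t n v * coefs_pad c0 n k v). split.
  - intros k u Hu. apply ex_derive_Rminus; [apply ex_derive_Rminus|]; [|apply ex_derive_mult|apply ex_derive_mult].
    + unfold coefs_shift. destruct k; simpl; [apply ex_derive_Rconst|apply Hd1, Hu].
    + apply ex_derive_rec_a_t; [exists c1; split; assumption|exact Hu].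
    + apply ex_derive_coefs_monic; assumption.
    + apply ex_derive_div; [apply ex_derive_hn..|apply Rgt_not_eq, hn_pos, Hu].
      * exists c1; split; assumption.
      * exact Hu.
      * exists c0; split; assumption.
      * exact Hu.
    + apply ex_derive_coefs_pad; assumption.
  - intros u x Hu. rewrite three_term_t, Hc1, Hc0 by exact Hu.
    assert (Hsplit : psum (fun k => coefs_shift c1 k u - rec_a_t (S n) u * coefs_monic c1 (S n) k u
                                    - rec_b_t n u * coefs_pad c0 n k u) (S (S n)) x
             = psum (fun k => coefs_shift c1 k u) (S (S n)) x
               - rec_a_t (S n) u * psum (fun k => coefs_monic c1 (S n) k u) (S (S n)) x
               - rec_b_t n u * psum (fun k => coefs_pad c0 n k u) (S (S n)) x).
    { rewrite !psum_fsum, <- !fsum_scal, <- !fsum_minus. apply fsum_ext; intros; ring. }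
    rewrite Hsplit, <- psum_coefs_monic, <- psum_coefs_pad.
    replace (psum (fun k => coefs_shift c1 k u) (S (S n)) x) with (x * psum (fun k => c1 k u) (S n) x)
      by (rewrite psum_mulx; apply psum_ext; intros k _; reflexivity).
    simpl. ring.
Qed.

Lemma smooth_coefs_all n : smooth_coefs n.
Proof.
  assert (H : forall n, smooth_coefs n /\ smooth_coefs (S n)).
  { induction n0 as [|m [IH1 IH2]]; [split; [apply smooth_coefs_0|apply smooth_coefs_1]|].
    split; [exact IH2|apply smooth_coefs_SS; assumption]. }
  apply H.
Qed.

End SmoothCoefficients.

Section LogDerivative.
Variables al A B : R.
Hypothesis Hal : 0 < al.
Hypothesis HA : 0 <= A.
Hypothesis HB : 0 < B.
Variable P : nat -> R -> R -> R.
Hypothesis HP : monic_OPS al A B P.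

Lemma Dn_pos k u : 0 < u -> 0 < Dn al A B P k u.
Proof.
  intros Hu. induction k; simpl; [lra|].
  apply Rmult_lt_0_compat; [exact IHk|apply hn_pos; assumption].
Qed.

Lemma is_derive_ln_Dn k u : 0 < u ->
  is_derive (fun s => ln (Dn al A B P k s)) u (- fsum (fun j => Rn_t al A B P j u) k).
Proof.
  intros Hu. induction k as [|k IH].
  - simpl. apply is_derive_ext with (fun _ => 0); [intros; rewrite ln_1; reflexivity|].
    rewrite Ropp_0. apply is_derive_Reals, derivable_pt_lim_const.
  - apply is_derive_ext_loc with (fun s => ln (Dn al A B P k s) + ln (hn al A B P k s)).
    { apply locally_pos_ext; [exact Hu|]. intros v Hv. simpl.
      rewrite ln_mult; [reflexivity|apply Dn_pos, Hv|apply (hn_pos al A B Hal HA HB P HP), Hv]. }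
    pose proof (hn_pos al A B Hal HA HB P HP k u Hu).
    simpl fsum. apply is_derive_Reals.
    replace (- (fsum (fun j => Rn_t al A B P j u) k + Rn_t al A B P k u)) with
      (- fsum (fun j => Rn_t al A B P j u) k
       + / hn al A B P k u * (- jump al B u * P k u u ^ 2)) by (unfold Rn_t, jump; field; lra).
    apply derivable_pt_lim_plus; [apply is_derive_Reals, IH|].
    apply (derivable_pt_lim_comp (hn al A B P k) ln); [|apply derivable_pt_lim_ln; exact H].
    apply is_derive_Reals, (is_derive_hn al A B Hal HA HB P HP); [apply (smooth_coefs_all al A B Hal HA HB P HP)|exact Hu].
Qed.

Lemma Hn_eq k u : 0 < u -> Hn al A B P k u = - u * fsum (fun j => Rn_t al A B P j u) k.
Proof.
  intros Hu. unfold Hn.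
  replace (Derive _ u) with (- fsum (fun j => Rn_t al A B P j u) k)
    by (symmetry; apply is_derive_unique, is_derive_ln_Dn, Hu).
  ring.
Qed.

Lemma Hn_succ k u : 0 < u -> Hn al A B P (S k) u = Hn al A B P k u - u * Rn_t al A B P k u.
Proof. intros Hu. rewrite !Hn_eq by exact Hu. simpl fsum. ring. Qed.

Lemma Rseq_at u : Rseq (wint al A B u) u (jump al B u) (fun n x => P n x u) = fun j => Rn_t al A B P j u.
Proof. reflexivity. Qed.

Lemma rseq_at u n : rseq (wint al A B u) u (jump al B u) (fun n x => P n x u) n = rn_t al A B P n u.
Proof. reflexivity. Qed.

Lemma rec_b_at u n :
  rec_b (wint al A B u) (fun n x => P n x u) n = hn al A B P n u / hn al A B P (n - 1) u.
Proof. reflexivity. Qed.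

End LogDerivative.

Lemma painleve_identities_algebra (t n a N b r Rn Rm Hp Hc Hx : R) :
  Hc = Hp - t * Rm -> Hx = Hc - t * Rn ->
  b = t * r + N - Hc -> r ^ 2 = b * Rn * Rm -> N + (2 * n + a) * r = b * (1 - Rn - Rm) ->
  t * Rn = Hc - Hx
  /\ (t + Hx - Hp - 2 * n - a <> 0 ->
      t * r = ((Hc - N) * (t + Hx - Hp) + t * N) / (t + Hx - Hp - 2 * n - a))
  /\ (t * r) ^ 2 = (N + t * r - Hc) * ((t * Rn) ^ 2 + t * Rn * (Hx + Hp - 2 * Hc)).
Proof.
  intros -> -> Hb Hr Hbr. split; [ring|split].
  - intros Hden. field_simplify_eq; [|exact Hden].
    assert (HHp : Hp = t * r + N - b + t * Rm) by lra. subst Hp.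
    apply Rminus_diag_uniq.
    transitivity (- t * (N + (2 * n + a) * r - b * (1 - Rn - Rm))); [ring|rewrite Hbr; ring].
  - transitivity (t ^ 2 * r ^ 2); [ring|]. rewrite Hr, Hb. ring.
Qed.

Theorem theorem7 (alpha A B t : R) (P : nat -> R -> R -> R) (n : nat) :
  0 < alpha -> 0 <= A -> 0 < B -> 0 < t ->
  monic_OPS alpha A B P ->
  (1 <= n)%nat ->
  let H := fun k => Hn alpha A B P k t in
  let tR := t * Rn_t alpha A B P n t in
  let tr := t * rn_t alpha A B P n t in
  let NN := INR n * (INR n + alpha) in
  tR = H n - H (S n)
  /\ (t + H (S n) - H (n - 1)%nat - 2 * INR n - alpha <> 0 ->
      tr = ((H n - NN) * (t + H (S n) - H (n - 1)%nat) + t * NN)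
           / (t + H (S n) - H (n - 1)%nat - 2 * INR n - alpha))
  /\ tr ^ 2 = (NN + tr - H n) * (tR ^ 2 + tR * (H (S n) + H (n - 1)%nat - 2 * H n)).
Proof.
  intros Hal HA HB Ht HP Hn1. cbv beta zeta.
  destruct n as [|m]; [lia|].
  ops_at rec_b_formula alpha A B P Hal HA HB HP t Ht Hb.
  ops_at rec_a_sum alpha A B P Hal HA HB HP t Ht Ha.
  ops_at rseq_sq alpha A B P Hal HA HB HP t Ht Hr.
  ops_at rec_b_Rseq alpha A B P Hal HA HB HP t Ht Hbr.
  specialize (Hb m). specialize (Hr m). specialize (Hbr m). rewrite Ha in Hb.
  rewrite Rseq_at, rseq_at, rec_b_at in Hb, Hr, Hbr.
  replace (S m - 1)%nat with m in * by lia.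
  eapply painleve_identities_algebra; try eassumption; try (apply Hn_succ; assumption).
  rewrite Hb, Hn_eq by assumption. ring.
Qed.
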